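(* Let $p(x)=a_0+a_1x+\dots+a_dx^d$, $d\ge1$, have positive integer coefficients, $r=p(1)$, and fix a type map $\tau$ as in the context. For every $q\in(0,1/a_0)$, every integer $k\ge1$ and every $x\in[0,1]$, the derivative $$\mathcal T^k_{p,q}(x)=\frac{\partial^k}{\partial s^k}S^p_{q,s}(x)\Big|_{s=q}$$ exists, and the function $\mathcal T^k_{p,q}$ is continuous on $[0,1]$.
   Context: Let $\mathcal A=\{0,1,\dots,r-1\}$ and let $\tau:\mathcal A\to\{0,\dots,d\}$ be a fixed map with $|\tau^{-1}(j)|=a_j$ for each $j$. For $q\in(0,1/a_0)$ let $t_q\in(0,1)$ be the unique solution in $(0,1)$ of $a_0q^d+a_1q^{d-1}t+\dots+a_dt^d=q^{d-1}$, and let $\nu_q$ be the product (Bernoulli) measure on $\mathcal A^{\mathbb N}$ whose coordinates are i.i.d. with $\nu_q(\omega_i=a)=t_q^{\tau(a)}/q^{\tau(a)-1}$. Let $F_q(y)=\nu_q\big(\{\omega:\sum_{i\ge1}\omega_ir^{-i}\le y\}\big)$ for $y\in[0,1]$; $F_q$ is a continuous strictly increasing bijection of $[0,1]$. For $q_1,q_2\in(0,1/a_0)$ put $S^p_{q_1,q_2}=F_{q_2}\circ F_{q_1}^{-1}$ (equivalently, $S^p_{q_1,q_2}$ maps the point with a given ''$q_1$-$r$-adic'' digit sequence to the point with the same digit sequence in the $q_2$-$r$-adic representation). *)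

From Stdlib Require Import Reals Lra Lia ZArith Arith List ClassicalEpsilon.
Open Scope R_scope.

(* r = p(1) = a_0 + ... + a_d *)
Definition rr (d : nat) (a : nat -> nat) : nat :=
  fold_right Nat.add 0%nat (map a (seq 0 (S d))).

(* |tau^{-1}(j)| = a_j, counted over the alphabet {0,..,r-1} *)
Definition tau_count (r : nat) (tau : nat -> nat) (j : nat) : nat :=
  length (filter (fun b => Nat.eqb (tau b) j) (seq 0 r)).

(* t_q: the (unique, by the paper) solution in (0,1) of
   a_0 q^d + a_1 q^(d-1) t + ... + a_d t^d = q^(d-1). *)
Definition t_eq (d : nat) (a : nat -> nat) (q t : R) : Prop :=
  0 < t < 1 /\
  sum_f_R0 (fun j => INR (a j) * q ^ (d - j) * t ^ j) d = q ^ (d - 1).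

Definition tq (d : nat) (a : nat -> nat) (q : R) : R :=
  epsilon (inhabits 0) (fun t => t_eq d a q t).

(* nu_q(omega_i = b) = t_q^{tau b} / q^{tau b - 1} *)
Definition piq (d : nat) (a tau : nat -> nat) (q : R) (b : nat) : R :=
  tq d a q ^ (tau b) * q / q ^ (tau b).

(* nu_q(omega_i < b) *)
Definition cq (d : nat) (a tau : nat -> nat) (q : R) (b : nat) : R :=
  fold_right Rplus 0 (map (piq d a tau q) (seq 0 b)).

Fixpoint pprod (f : nat -> R) (n : nat) : R :=
  match n with O => 1 | S m => pprod f m * f (S m) end.

(* i-th r-adic digit (i >= 1) of y in [0,1): floor(r^i y) mod r *)
Definition digit (r : nat) (y : R) (i : nat) : nat :=
  Z.to_nat (Z.modulo (up (INR r ^ i * y) - 1) (Z.of_nat r)).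

(* F_q(y) = nu_q{omega : sum omega_i r^-i <= y}, computed digitwise:
   sum_{i>=1} nu_q(omega_1..omega_{i-1} = y_1..y_{i-1}) * nu_q(omega_i < y_i). *)
Definition Fq (d : nat) (a tau : nat -> nat) (q y : R) : R :=
  if Rle_dec 1 y then 1 else
  epsilon (inhabits 0) (fun l =>
    infinite_sum (fun n =>
      pprod (fun j => piq d a tau q (digit (rr d a) y j)) n *
      cq d a tau q (digit (rr d a) y (S n))) l).

Definition Fq_inv (d : nat) (a tau : nat -> nat) (q x : R) : R :=
  epsilon (inhabits 0) (fun y => 0 <= y <= 1 /\ Fq d a tau q y = x).

Definition Sp (d : nat) (a tau : nat -> nat) (q1 q2 x : R) : R :=
  Fq d a tau q2 (Fq_inv d a tau q1 x).

Fixpoint is_nth_deriv (k : nat) (f : R -> R) (s v : R) : Prop :=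
  match k with
  | O => v = f s
  | S k' => exists delta, 0 < delta /\ exists g : R -> R,
      (forall t, Rabs (t - s) < delta -> is_nth_deriv k' f t (g t)) /\
      derivable_pt_lim g s v
  end.

Definition continuous_on_01 (T : R -> R) : Prop :=
  forall x, 0 <= x <= 1 -> forall eps, 0 < eps -> exists delta, 0 < delta /\
    forall y, 0 <= y <= 1 -> Rabs (y - x) < delta -> Rabs (T y - T x) < eps.

From Pilot Require Import Defs.
From Stdlib Require Import Reals Lra Lia ZArith Arith List.
From Stdlib Require Import ClassicalEpsilon FunctionalExtensionality Ranalysis5.
Open Scope R_scope.

(* Put [u_s = t_s / s]; then [p(u_s) = 1 / s] and [nu_s(omega_i = b) = s u_s^(tau b)], so by
   the implicit function theorem every digit probability is smooth in [s], with all
   derivatives bounded near [q]. For [y] with digits [y_1 y_2 ...],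
   [F_s(y) = sum_n P_n(s) c_(y_(n+1))(s)], where [P_n(s)] is the [nu_s]-measure of the
   cylinder [y_1 ... y_n] and [c_b(s) = nu_s(omega_1 < b)]. Every digit has probability at
   most [rho < 1] and [P_n' = P_n sum_(j <= n) (log pi_(y_j))'], so the [m]-th derivative of
   [P_n] is [O(sigma^n)] for any [sigma] in [(rho, 1)], uniformly in the digits: the series
   may be differentiated termwise any number of times. The resulting derivatives are
   continuous in [y]: for points in the same or in adjacent cylinders of length [N], the two
   series agree up to a tail [O(sigma^N)] and one cylinder term, because the telescoping
   identities between partial sums hold for every [s], hence for all their derivatives.
   Finally [S_(q,s)(x) = F_s(F_q^-1(x))], and [F_q^-1] is continuous because [F_q] is a
   continuous increasing bijection of [0, 1]. *)

(** * Finite sums and derivatives *)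

Fixpoint fsum (f : nat -> R) (n : nat) : R :=
  match n with O => 0 | S m => fsum f m + f m end.

Lemma fsum_ext f g n : (forall j, (j < n)%nat -> f j = g j) -> fsum f n = fsum g n.
Proof.
  induction n as [|n IH]; simpl; intros H; auto.
  rewrite IH by (intros; apply H; lia). rewrite H by lia. reflexivity.
Qed.

Lemma fsum_plus f g n : fsum (fun j => f j + g j) n = fsum f n + fsum g n.
Proof. induction n as [|n IH]; simpl; [ring| rewrite IH; ring]. Qed.

Lemma fsum_scal c f n : fsum (fun j => c * f j) n = c * fsum f n.
Proof. induction n as [|n IH]; simpl; [ring| rewrite IH; ring]. Qed.

Lemma fsum_zero n : fsum (fun _ => 0) n = 0.
Proof. induction n as [|n IH]; simpl; [ring| rewrite IH; ring]. Qed.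

Lemma sum_f_R0_fsum f n : sum_f_R0 f n = fsum f (S n).
Proof. induction n as [|n IH]; simpl; [ring| simpl in IH; rewrite IH; ring]. Qed.

Lemma fsum_add f n m : fsum f (n + m) = fsum f n + fsum (fun j => f (n + j)%nat) m.
Proof.
  induction m as [|m IH]; simpl; [rewrite Nat.add_0_r; ring|].
  rewrite Nat.add_succ_r; simpl; rewrite IH; ring.
Qed.

Lemma fsum_le f g n : (forall j, (j < n)%nat -> f j <= g j) -> fsum f n <= fsum g n.
Proof.
  induction n as [|n IH]; simpl; intros H; [lra|].
  assert (fsum f n <= fsum g n) by (apply IH; intros; apply H; lia).
  assert (f n <= g n) by (apply H; lia). lra.
Qed.

Lemma fsum_nonneg f n : (forall j, (j < n)%nat -> 0 <= f j) -> 0 <= fsum f n.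
Proof. intros H. rewrite <- (fsum_zero n). apply fsum_le; auto. Qed.

Lemma Rabs_fsum_le f n : Rabs (fsum f n) <= fsum (fun j => Rabs (f j)) n.
Proof.
  induction n as [|n IH]; simpl; [rewrite Rabs_R0; lra|].
  eapply Rle_trans; [apply Rabs_triang|]. lra.
Qed.

Lemma fsum_term_le f n j : (forall k, (k < n)%nat -> 0 <= f k) -> (j < n)%nat -> f j <= fsum f n.
Proof.
  induction n as [|n IH]; intros Hf Hj; [lia|]. simpl.
  assert (0 <= f n) by (apply Hf; lia).
  destruct (Nat.eq_dec j n) as [->|Hne].
  - assert (0 <= fsum f n) by (apply fsum_nonneg; intros; apply Hf; lia). lra.
  - assert (f j <= fsum f n) by (apply IH; [intros; apply Hf| ]; lia). lra.
Qed.

Lemma fsum_two_terms_le f n i j : (forall k, (k < n)%nat -> 0 <= f k) ->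
  (i < n)%nat -> (j < n)%nat -> i <> j -> f i + f j <= fsum f n.
Proof.
  induction n as [|n IH]; intros Hf Hi Hj Hij; [lia|]. simpl.
  assert (Hsub : forall k, (k < n)%nat -> 0 <= f k) by (intros; apply Hf; lia).
  destruct (Nat.eq_dec j n) as [->|Hjn]; [|destruct (Nat.eq_dec i n) as [->|Hin]].
  - assert (f i <= fsum f n) by (apply fsum_term_le; auto; lia). lra.
  - assert (f j <= fsum f n) by (apply fsum_term_le; auto; lia). lra.
  - assert (f i + f j <= fsum f n) by (apply IH; auto; lia).
    assert (0 <= f n) by (apply Hf; lia). lra.
Qed.

Lemma INR_fold_right_add (a : nat -> nat) n :
  INR (fold_right Nat.add 0%nat (map a (seq 0 n))) = fsum (fun j => INR (a j)) n.
Proof.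
  assert (Hc : forall l c, fold_right Nat.add c l = (fold_right Nat.add 0 l + c)%nat).
  { induction l as [|x l IH]; simpl; intros; [auto| rewrite IH; lia]. }
  induction n as [|n IH]; [reflexivity|].
  rewrite seq_S, map_app, fold_right_app. simpl. rewrite Hc, plus_INR, IH. simpl.
  rewrite Nat.add_0_r. reflexivity.
Qed.

Lemma fold_right_Rplus_fsum (f : nat -> R) n :
  fold_right Rplus 0 (map f (seq 0 n)) = fsum f n.
Proof.
  assert (Hc : forall l c, fold_right Rplus c l = fold_right Rplus 0 l + c).
  { induction l as [|x l IH]; simpl; intros; [ring| rewrite IH; ring]. }
  induction n as [|n IH]; [reflexivity|].
  rewrite seq_S, map_app, fold_right_app. simpl. rewrite Hc, IH. ring.
Qed.

Lemma derivable_pt_lim_near_ext (f g : R -> R) x l :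
  (exists del, 0 < del /\ forall y, Rabs (y - x) < del -> f y = g y) ->
  derivable_pt_lim f x l -> derivable_pt_lim g x l.
Proof.
  intros [del [Hdel Heq]] Hf eps Heps.
  destruct (Hf eps Heps) as [d1 Hd1].
  assert (Hm : 0 < Rmin d1 del) by (apply Rmin_pos; [apply cond_pos|lra]).
  exists (mkposreal _ Hm); intros h Hh Hlt; simpl in Hlt.
  assert (Hl := Rmin_l d1 del). assert (Hr := Rmin_r d1 del).
  rewrite <- (Heq x), <- (Heq (x + h)).
  - apply Hd1; auto. lra.
  - replace (x + h - x) with h by ring. lra.
  - replace (x - x) with 0 by ring. rewrite Rabs_R0; lra.
Qed.

Lemma derivable_pt_lim_Rinv (f : R -> R) x l :
  derivable_pt_lim f x l -> f x <> 0 ->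
  derivable_pt_lim (fun y => / f y) x (- l * (/ f x * / f x)).
Proof.
  intros Hf Hx.
  assert (H := derivable_pt_lim_div (fun _ => 1) f x 0 l (derivable_pt_lim_const 1 x) Hf Hx).
  replace (- l * (/ f x * / f x)) with ((0 * f x - l * 1) / Rsqr (f x))
    by (unfold Rsqr; field; auto).
  eapply derivable_pt_lim_near_ext; [|exact H].
  exists 1; split; [lra|]. intros y _. unfold div_fct. unfold Rdiv; ring.
Qed.

Lemma derivable_pt_lim_pow_fun (f : R -> R) x l n :
  derivable_pt_lim f x l ->
  derivable_pt_lim (fun y => f y ^ n) x (INR n * f x ^ pred n * l).
Proof.
  intros Hf. apply (derivable_pt_lim_comp f (fun y => y ^ n)); auto.
  apply derivable_pt_lim_pow.
Qed.

Lemma derivable_pt_lim_fsum (F F' : nat -> R -> R) n x :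
  (forall j, (j < n)%nat -> derivable_pt_lim (F j) x (F' j x)) ->
  derivable_pt_lim (fun y => fsum (fun j => F j y) n) x (fsum (fun j => F' j x) n).
Proof.
  induction n as [|n IH]; simpl; intros H.
  - apply derivable_pt_lim_const.
  - apply derivable_pt_lim_plus; [apply IH; intros; apply H; lia| apply H; lia].
Qed.

Lemma continuity_pt_eps f x : continuity_pt f x <->
  forall eps, 0 < eps -> exists del, 0 < del /\
    forall y, Rabs (y - x) < del -> Rabs (f y - f x) < eps.
Proof.
  unfold continuity_pt, continue_in, limit1_in, limit_in, D_x, no_cond; simpl; unfold Rdist.
  split.
  - intros H eps He. destruct (H eps He) as [del [Hd Hy]]. exists del; split; [lra|].
    intros y Hy'. destruct (Req_dec y x) as [->|Hne].
    + replace (f x - f x) with 0 by ring. rewrite Rabs_R0; lra.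
    + apply Hy; auto.
  - intros H eps He. destruct (H eps He) as [del [Hd Hy]]. exists del; split; [lra|].
    intros y [_ Hy']. apply Hy; auto.
Qed.

(* Carathéodory's criterion. *)
Lemma derivable_pt_lim_slope (f phi : R -> R) x :
  (exists del, 0 < del /\ forall y, Rabs (y - x) < del -> f y - f x = (y - x) * phi y) ->
  continuity_pt phi x -> derivable_pt_lim f x (phi x).
Proof.
  intros [del [Hd Heq]] Hc eps He.
  destruct (proj1 (continuity_pt_eps phi x) Hc eps He) as [d2 [Hd2 H2]].
  assert (Hm : 0 < Rmin del d2) by (apply Rmin_pos; lra).
  exists (mkposreal _ Hm); simpl. intros h Hh Hlt.
  assert (Hl1 := Rmin_l del d2). assert (Hl2 := Rmin_r del d2).
  rewrite Heq by (replace (x + h - x) with h by ring; lra).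
  replace ((x + h - x) * phi (x + h) / h - phi x) with (phi (x + h) - phi x) by (field; auto).
  apply H2. replace (x + h - x) with h by ring. lra.
Qed.

Lemma continuity_pt_fsum (F : nat -> R -> R) n x :
  (forall j, (j < n)%nat -> continuity_pt (F j) x) ->
  continuity_pt (fun z => fsum (fun j => F j z) n) x.
Proof.
  induction n as [|n IH]; intros H; simpl.
  - apply continuity_pt_const. intros ? ?; reflexivity.
  - apply continuity_pt_plus; [apply IH; intros; apply H; lia| apply H; lia].
Qed.

(** * Families of functions whose derivatives are uniformly dominated *)

Section Dominated.

Variables lo hi : R.

Lemma interval_nbhd s : lo < s < hi ->
  exists del, 0 < del /\ forall y, Rabs (y - s) < del -> lo < y < hi.
Proof.
  intros Hs. exists (Rmin (s - lo) (hi - s)); split; [apply Rmin_pos; lra|].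
  intros y Hy. assert (H1 := Rmin_l (s - lo) (hi - s)). assert (H2 := Rmin_r (s - lo) (hi - s)).
  apply Rabs_def2 in Hy. lra.
Qed.

Lemma derivable_pt_lim_interval_ext (f g : R -> R) s l : lo < s < hi ->
  (forall y, lo < y < hi -> f y = g y) -> derivable_pt_lim f s l -> derivable_pt_lim g s l.
Proof.
  intros Hs Heq. apply derivable_pt_lim_near_ext.
  destruct (interval_nbhd s Hs) as [del [Hd Hy]]. exists del; split; auto.
Qed.

Definition bounded_by {I : Type} (f : I -> R -> R) (w : I -> R) : Prop :=
  exists K, forall i s, lo < s < hi -> Rabs (f i s) <= K * w i.

Fixpoint dominated {I : Type} (J : nat) (f : I -> R -> R) (w : I -> R) : Prop :=
  bounded_by f w /\
  match J with
  | O => True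
  | S J' => exists f' : I -> R -> R,
      (forall i s, lo < s < hi -> derivable_pt_lim (f i) s (f' i s)) /\ dominated J' f' w
  end.

Lemma bounded_by_plus {I} (f g : I -> R -> R) w :
  bounded_by f w -> bounded_by g w -> bounded_by (fun i s => f i s + g i s) w.
Proof.
  intros [K1 H1] [K2 H2]. exists (K1 + K2). intros i s Hs.
  specialize (H1 i s Hs); specialize (H2 i s Hs).
  eapply Rle_trans; [apply Rabs_triang| lra].
Qed.

Lemma bounded_by_weaken {I} (f : I -> R -> R) w w' C :
  (forall i, 0 <= w i) -> (forall i, w i <= C * w' i) -> bounded_by f w -> bounded_by f w'.
Proof.
  intros Hw Hww' [K H]. exists (Rabs K * C). intros i s Hs.
  eapply Rle_trans; [apply H; auto|].
  apply Rle_trans with (Rabs K * w i).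
  - apply Rmult_le_compat_r; [auto| apply RRle_abs].
  - rewrite Rmult_assoc. apply Rmult_le_compat_l; [apply Rabs_pos| auto].
Qed.

Lemma bounded_by_mult {I} (f g : I -> R -> R) w1 w2 :
  (forall i, 0 <= w1 i) -> (forall i, 0 <= w2 i) ->
  bounded_by f w1 -> bounded_by g w2 -> bounded_by (fun i s => f i s * g i s) (fun i => w1 i * w2 i).
Proof.
  intros Hw1 Hw2 [K1 H1] [K2 H2]. exists (Rabs K1 * Rabs K2). intros i s Hs. rewrite Rabs_mult.
  assert (Rabs (f i s) <= Rabs K1 * w1 i).
  { eapply Rle_trans; [apply H1; auto| apply Rmult_le_compat_r; [auto| apply RRle_abs]]. }
  assert (Rabs (g i s) <= Rabs K2 * w2 i).
  { eapply Rle_trans; [apply H2; auto| apply Rmult_le_compat_r; [auto| apply RRle_abs]]. }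
  replace (Rabs K1 * Rabs K2 * (w1 i * w2 i)) with ((Rabs K1 * w1 i) * (Rabs K2 * w2 i)) by ring.
  apply Rmult_le_compat; auto; apply Rabs_pos.
Qed.

Lemma dominated_bounded {I} J (f : I -> R -> R) w : dominated J f w -> bounded_by f w.
Proof. destruct J; simpl; tauto. Qed.

Lemma dominated_pred {I} J (f : I -> R -> R) w : dominated (S J) f w -> dominated J f w.
Proof.
  revert f; induction J as [|J IH]; intros f [Hb [f' [Hd Hf']]]; split; auto.
  exists f'; split; auto.
Qed.

Lemma dominated_ext {I} J (f g : I -> R -> R) w :
  (forall i s, lo < s < hi -> f i s = g i s) -> dominated J f w -> dominated J g w.
Proof.
  revert f g; induction J as [|J IH]; intros f g Heq [[K HK] Hf]; split;
    try (exists K; intros; rewrite <- Heq; auto); auto.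
  destruct Hf as [f' [Hd Hf']]. exists f'; split; auto.
  intros i s Hs. apply (derivable_pt_lim_interval_ext (f i)); auto.
Qed.

Lemma dominated_weaken {I} J (f : I -> R -> R) w w' C :
  (forall i, 0 <= w i) -> (forall i, w i <= C * w' i) -> dominated J f w -> dominated J f w'.
Proof.
  intros Hw Hww'. revert f; induction J as [|J IH]; intros f [Hb Hf]; split;
    try (eapply bounded_by_weaken; eauto); auto.
  destruct Hf as [f' [Hd Hf']]. exists f'; split; auto.
Qed.

Lemma dominated_plus {I} J (f g : I -> R -> R) w :
  dominated J f w -> dominated J g w -> dominated J (fun i s => f i s + g i s) w.
Proof.
  revert f g; induction J as [|J IH]; intros f g [Hbf Hf] [Hbg Hg]; split;
    try (apply bounded_by_plus; auto); auto.
  destruct Hf as [f' [Hf1 Hf2]], Hg as [g' [Hg1 Hg2]].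
  exists (fun i s => f' i s + g' i s); split; [intros; apply derivable_pt_lim_plus; auto| auto].
Qed.

Lemma dominated_mult {I} J (f g : I -> R -> R) w1 w2 :
  (forall i, 0 <= w1 i) -> (forall i, 0 <= w2 i) ->
  dominated J f w1 -> dominated J g w2 -> dominated J (fun i s => f i s * g i s) (fun i => w1 i * w2 i).
Proof.
  intros Hw1 Hw2. revert f g; induction J as [|J IH]; intros f g Hf Hg;
    split; try (apply bounded_by_mult; auto; eapply dominated_bounded; eauto); auto.
  pose proof Hf as [_ [f' [Hf1 Hf2]]]. pose proof Hg as [_ [g' [Hg1 Hg2]]].
  exists (fun i s => f' i s * g i s + f i s * g' i s); split.
  - intros; apply derivable_pt_lim_mult; auto.
  - apply dominated_plus; apply IH; auto; apply dominated_pred; auto.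
Qed.

Lemma dominated_const {I} J (c : I -> R) w :
  (forall i, 0 <= w i) -> (exists K, forall i, Rabs (c i) <= K * w i) ->
  dominated J (fun i _ => c i) w.
Proof.
  intros Hw. revert c; induction J as [|J IH]; intros c [K HK]; split;
    try (exists K; auto); auto.
  exists (fun _ _ => 0); split; [intros; apply derivable_pt_lim_const|].
  apply (IH (fun _ => 0)). exists 0. intros i. rewrite Rabs_R0. specialize (Hw i). lra.
Qed.

Lemma dominated_const1 {I} J (c : R) : dominated J (fun (_ : I) _ => c) (fun _ => 1).
Proof. apply dominated_const; [intros; lra|]. exists (Rabs c); intros; lra. Qed.

Lemma dominated_mult1 {I} J (f g : I -> R -> R) :
  dominated J f (fun _ => 1) -> dominated J g (fun _ => 1) ->
  dominated J (fun i s => f i s * g i s) (fun _ => 1).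
Proof.
  intros Hf Hg. apply (dominated_weaken J _ (fun _ => 1 * 1) _ 1); [intros; lra| intros; lra|].
  apply dominated_mult; auto; intros; lra.
Qed.

Lemma dominated_id {I} J : dominated (I:=I) J (fun _ s => s) (fun _ => 1).
Proof.
  assert (Hb : bounded_by (I:=I) (fun _ s => s) (fun _ => 1)).
  { exists (Rabs lo + Rabs hi). intros i s Hs. rewrite Rmult_1_r.
    unfold Rabs; repeat destruct Rcase_abs; lra. }
  destruct J; split; auto.
  exists (fun _ _ => 1); split; [intros; apply derivable_pt_lim_id| apply dominated_const1].
Qed.

Lemma dominated_reindex {I I2} J (g : I2 -> R -> R) w (h : I -> I2) :
  dominated J g w -> dominated J (fun i => g (h i)) (fun i => w (h i)).
Proof.
  revert g; induction J as [|J IH]; intros g [[K HK] Hg]; split;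
    try (exists K; intros; auto); auto.
  destruct Hg as [g' [H1 H2]]. exists (fun i => g' (h i)); split; auto.
Qed.

Lemma dominated_fsum {I} J (F : nat -> I -> R -> R) w N :
  (forall i, 0 <= w i) -> (forall j, (j < N)%nat -> dominated J (F j) w) ->
  dominated J (fun i s => fsum (fun j => F j i s) N) w.
Proof.
  intros Hw. induction N as [|N IH]; intros H; simpl.
  - apply (dominated_const J (fun _ => 0)); auto. exists 0; intros; rewrite Rabs_R0; lra.
  - apply dominated_plus; [apply IH; intros; apply H; lia| apply H; lia].
Qed.

Lemma dominated_inv {I} J (f : I -> R -> R) m :
  0 < m -> (forall i s, lo < s < hi -> m <= Rabs (f i s)) ->
  dominated J f (fun _ => 1) -> dominated J (fun i s => / f i s) (fun _ => 1).
Proof.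
  intros Hm Hlow. revert f Hlow; induction J as [|J IH]; intros f Hlow Hf.
  all: assert (Hb : bounded_by (fun i s => / f i s) (fun _ => 1))
         by (exists (/ m); intros i s Hs; rewrite Rmult_1_r, Rabs_inv;
             apply Rinv_le_contravar; auto).
  all: split; auto.
  pose proof Hf as [_ [f' [Hf1 Hf2]]].
  exists (fun i s => - f' i s * (/ f i s * / f i s)); split.
  - intros i s Hs. apply derivable_pt_lim_Rinv; auto.
    specialize (Hlow i s Hs). intro E; rewrite E, Rabs_R0 in Hlow; lra.
  - assert (HI : dominated J (fun i s => / f i s) (fun _ => 1))
      by (apply IH; auto; apply dominated_pred; auto).
    assert (Hn : dominated J (fun i s => -1 * f' i s) (fun _ => 1))
      by (apply dominated_mult1; auto; apply dominated_const1).
    apply (dominated_ext J (fun i s => (-1 * f' i s) * (/ f i s * / f i s))); [intros; ring|].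
    apply dominated_mult1; [exact Hn| apply dominated_mult1; exact HI].
Qed.

Lemma dominated_pow {I} J (f : I -> R -> R) (e : I -> nat) D :
  (forall i, (e i <= D)%nat) ->
  dominated J f (fun _ => 1) -> dominated J (fun i s => f i s ^ e i) (fun _ => 1).
Proof.
  revert f e; induction J as [|J IH]; intros f e He Hf.
  all: assert (Hb : bounded_by (fun i s => f i s ^ e i) (fun _ => 1)).
  all: try (destruct (dominated_bounded _ _ _ Hf) as [K HK];
    exists ((1 + Rabs K) ^ D); intros i s Hs; rewrite Rmult_1_r, <- RPow_abs;
    specialize (HK i s Hs); rewrite Rmult_1_r in HK;
    assert (K <= Rabs K) by apply RRle_abs; assert (0 <= Rabs K) by apply Rabs_pos;
    apply Rle_trans with ((1 + Rabs K) ^ e i);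
    [apply pow_incr; split; [apply Rabs_pos| lra]| apply Rle_pow; auto; lra]).
  all: split; auto.
  pose proof Hf as [_ [f' [Hf1 Hf2]]].
  exists (fun i s => INR (e i) * f i s ^ pred (e i) * f' i s); split.
  - intros; apply derivable_pt_lim_pow_fun; auto.
  - repeat apply dominated_mult1; auto.
    + apply dominated_const; [intros; lra|]. exists (INR D). intros i.
      rewrite Rmult_1_r, Rabs_right by (apply Rle_ge, pos_INR). apply le_INR; auto.
    + apply IH; [intros; specialize (He i); lia| apply dominated_pred; auto].
Qed.

Definition jet (J : nat) (D : nat -> R -> R) : Prop :=
  forall m, (m < J)%nat -> forall s, lo < s < hi -> derivable_pt_lim (D m) s (D (S m) s).

Lemma dominated_jet {I} J (f : I -> R -> R) w : (forall i, 0 <= w i) -> dominated J f w ->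
  exists (D : nat -> I -> R -> R) K,
    (forall i, D O i = f i) /\ (forall i, jet J (fun m => D m i)) /\
    forall m i s, (m <= J)%nat -> lo < s < hi -> Rabs (D m i s) <= K * w i.
Proof.
  intros Hw. revert f; induction J as [|J IH]; intros f [[K HK] Hf].
  - exists (fun _ => f), K. split; [auto| split].
    + intros i m Hm; lia.
    + intros m i s Hm Hs. replace m with O by lia. auto.
  - destruct Hf as [f' [Hf1 Hf2]]. destruct (IH f' Hf2) as [D' [K' [H0 [H1 H2]]]].
    exists (fun m => match m with O => f | S m' => D' m' end), (Rmax K K').
    split; [auto| split].
    + intros i [|m] Hm s Hs; [rewrite H0; auto| apply H1; auto; lia].
    + intros [|m] i s Hm Hs.
      * eapply Rle_trans; [apply HK; auto| apply Rmult_le_compat_r; [auto| apply Rmax_l]].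
      * eapply Rle_trans; [apply H2; auto; lia| apply Rmult_le_compat_r; [auto| apply Rmax_r]].
Qed.

Lemma jet_unique J (D D' : nat -> R -> R) : jet J D -> jet J D' ->
  (forall s, lo < s < hi -> D O s = D' O s) ->
  forall m, (m <= J)%nat -> forall s, lo < s < hi -> D m s = D' m s.
Proof.
  intros HD HD' H0 m. induction m as [|m IH]; intros Hm s Hs; auto.
  apply (uniqueness_limite (D' m) s); [|apply HD'; auto; lia].
  apply (derivable_pt_lim_interval_ext (D m)); [exact Hs| intros; apply IH; auto; lia|].
  apply HD; auto; lia.
Qed.

Lemma jet_plus J D1 D2 : jet J D1 -> jet J D2 -> jet J (fun m s => D1 m s + D2 m s).
Proof. intros H1 H2 m Hm s Hs. apply derivable_pt_lim_plus; auto. Qed.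

Lemma jet_fsum J (D : nat -> nat -> R -> R) N :
  (forall j, (j < N)%nat -> jet J (fun m => D m j)) ->
  jet J (fun m s => fsum (fun j => D m j s) N).
Proof.
  intros H m Hm s Hs.
  apply (derivable_pt_lim_fsum (fun j => D m j) (fun j => D (S m) j)). intros; apply H; auto.
Qed.

Lemma jet_const J c : jet J (fun m _ => match m with O => c | _ => 0 end).
Proof. intros [|m] Hm s Hs; apply derivable_pt_lim_const. Qed.

Lemma jet_is_nth_deriv J (D : nat -> R -> R) (f : R -> R) : jet J D ->
  (forall s, lo < s < hi -> f s = D O s) ->
  forall m, (m <= J)%nat -> forall s, lo < s < hi -> is_nth_deriv m f s (D m s).
Proof.
  intros HJ Hf m. induction m as [|m IH]; intros Hm s Hs; simpl; [symmetry; auto|].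
  destruct (interval_nbhd s Hs) as [del [Hd Hy]]. exists del; split; auto.
  exists (D m); split; [intros t Ht; apply IH; auto; lia| apply HJ; auto; lia].
Qed.

End Dominated.

(** * Series with geometrically decaying terms *)

Definition lim_seq (u : nat -> R) : R := epsilon (inhabits 0) (fun l => Un_cv u l).

Definition series (u : nat -> R) : R := lim_seq (fun N => fsum u N).

Lemma lim_seq_spec u l : Un_cv u l -> lim_seq u = l.
Proof.
  intros H. unfold lim_seq. apply (UL_sequence u); auto.
  apply (epsilon_spec (inhabits 0) (fun l => Un_cv u l)). exists l; auto.
Qed.

Lemma series_ext u v : (forall n, u n = v n) -> series u = series v.
Proof.
  intros H. unfold series. f_equal. apply functional_extensionality. intros N.
  apply fsum_ext. auto.
Qed.

Lemma Un_cv_bounds (u : nat -> R) l N A B :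
  Un_cv u l -> (forall n, (N <= n)%nat -> A <= u n <= B) -> A <= l <= B.
Proof.
  intros Hu H. split; apply Rnot_lt_le; intros Hlt;
    [destruct (Hu (A - l)) as [M HM]| destruct (Hu (l - B)) as [M HM]]; try lra;
    specialize (HM (max M N) (Nat.le_max_l _ _)); specialize (H (max M N) (Nat.le_max_r _ _));
    unfold Rdist in HM; apply Rabs_def2 in HM; lra.
Qed.

Lemma fsum_geom s L : fsum (fun j => s ^ j) L * (1 - s) = 1 - s ^ L.
Proof. induction L as [|L IH]; simpl; [ring|]. rewrite Rmult_plus_distr_r, IH. ring. Qed.

Lemma geometric_small s K eps : 0 <= s < 1 -> 0 <= K -> 0 < eps ->
  exists N, forall n, (N <= n)%nat -> K * s ^ n / (1 - s) < eps.
Proof.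
  intros Hs HK He.
  destruct (pow_lt_1_zero s) with (y := eps * (1 - s) / (K + 1)) as [N HN].
  - rewrite Rabs_right; lra.
  - apply Rdiv_lt_0_compat; [apply Rmult_lt_0_compat|]; lra.
  - exists N. intros n Hn. specialize (HN n Hn).
    assert (0 <= s ^ n) by (apply pow_le; lra).
    rewrite Rabs_right in HN by lra.
    apply Rmult_lt_reg_r with (1 - s); [lra|]. unfold Rdiv.
    rewrite Rmult_assoc, Rinv_l, Rmult_1_r by lra.
    apply Rle_lt_trans with ((K + 1) * s ^ n); [nra|].
    apply Rmult_lt_reg_l with (/ (K + 1)); [apply Rinv_0_lt_compat; lra|].
    rewrite <- Rmult_assoc, Rinv_l, Rmult_1_l by lra.
    apply Rlt_le_trans with (eps * (1 - s) / (K + 1)); [lra| right; field; lra].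
Qed.

Lemma geometric_tail (u : nat -> R) s K : 0 <= s < 1 -> (forall n, Rabs (u n) <= K * s ^ n) ->
  forall n m, (n <= m)%nat -> Rabs (fsum u m - fsum u n) <= K * s ^ n / (1 - s).
Proof.
  intros Hs Hu n m Hnm.
  assert (HK : 0 <= K) by (specialize (Hu O); simpl in Hu; assert (H := Rabs_pos (u O)); lra).
  replace m with (n + (m - n))%nat by lia. rewrite fsum_add.
  replace (fsum u n + fsum (fun j => u (n + j)%nat) (m - n) - fsum u n)
    with (fsum (fun j => u (n + j)%nat) (m - n)) by ring.
  eapply Rle_trans; [apply Rabs_fsum_le|].
  apply Rle_trans with (fsum (fun j => K * s ^ n * s ^ j) (m - n)).
  - apply fsum_le; intros j _. rewrite Rmult_assoc, <- pow_add. auto.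
  - rewrite (fsum_scal (K * s ^ n) (fun j => s ^ j)). unfold Rdiv. apply Rmult_le_compat_l.
    + apply Rmult_le_pos; auto. apply pow_le; lra.
    + assert (H := fsum_geom s (m - n)). assert (0 <= s ^ (m - n)) by (apply pow_le; lra).
      apply Rmult_le_reg_r with (1 - s); [lra|]. rewrite H, Rinv_l; lra.
Qed.

Lemma series_geometric (u : nat -> R) s K : 0 <= s < 1 -> (forall n, Rabs (u n) <= K * s ^ n) ->
  Un_cv (fun N => fsum u N) (series u) /\
  forall N, Rabs (series u - fsum u N) <= K * s ^ N / (1 - s).
Proof.
  intros Hs Hu.
  assert (HK : 0 <= K) by (specialize (Hu O); simpl in Hu; assert (H := Rabs_pos (u O)); lra).
  assert (Hc : Cauchy_crit (fun N => fsum u N)).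
  { intros eps He. destruct (geometric_small s K (eps / 2) Hs HK) as [N HN]; [lra|].
    exists N. intros n m Hn Hm. unfold Rdist.
    assert (H1 := geometric_tail u s K Hs Hu N n Hn).
    assert (H2 := geometric_tail u s K Hs Hu N m Hm).
    assert (HsN := HN N (le_n N)).
    replace (fsum u n - fsum u m) with ((fsum u n - fsum u N) - (fsum u m - fsum u N)) by ring.
    eapply Rle_lt_trans; [apply Rabs_triang|]. rewrite Rabs_Ropp. lra. }
  destruct (R_complete _ Hc) as [l Hl].
  unfold series; rewrite (lim_seq_spec _ l Hl). split; auto.
  intros N. apply Rnot_lt_le; intros Hlt.
  destruct (Hl (Rabs (l - fsum u N) - K * s ^ N / (1 - s))) as [M HM]; [lra|].
  specialize (HM (max M N) (Nat.le_max_l _ _)). unfold Rdist in HM.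
  assert (H1 := geometric_tail u s K Hs Hu N (max M N) (Nat.le_max_r _ _)).
  assert (Rabs (l - fsum u N) <= Rabs (fsum u (max M N) - l) + Rabs (fsum u (max M N) - fsum u N)).
  { replace (l - fsum u N) with (- (fsum u (max M N) - l) + (fsum u (max M N) - fsum u N)) by ring.
    eapply Rle_trans; [apply Rabs_triang|]. rewrite Rabs_Ropp; lra. }
  lra.
Qed.

Section SeriesJet.

Variables lo hi : R.

(* Termwise differentiation: the differentiated partial sums converge uniformly. *)
Lemma series_jet J (D : nat -> nat -> R -> R) s K :
  0 <= s < 1 -> (forall n, jet lo hi J (fun m => D m n)) ->
  (forall m n x, (m <= J)%nat -> lo < x < hi -> Rabs (D m n x) <= K * s ^ n) ->
  jet lo hi (pred J) (fun m x => series (fun n => D m n x)).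
Proof.
  intros Hs HJ HB m Hm x Hx.
  assert (HK : 0 <= K).
  { specialize (HB O O x (Nat.le_0_l _) Hx). simpl in HB.
    assert (H := Rabs_pos (D O O x)). lra. }
  assert (Hr : 0 < Rmin (x - lo) (hi - x)) by (apply Rmin_pos; lra).
  set (ball := mkposreal _ Hr).
  assert (Hball : forall y, Boule x ball y -> lo < y < hi).
  { intros y Hy. unfold Boule in Hy; simpl in Hy.
    assert (H1 := Rmin_l (x - lo) (hi - x)). assert (H2 := Rmin_r (x - lo) (hi - x)).
    apply Rabs_def2 in Hy. lra. }
  assert (Hcvu : forall m', (m' <= J)%nat -> CVU (fun N y => fsum (fun n => D m' n y) N)
                              (fun y => series (fun n => D m' n y)) x ball).
  { intros m' Hm' eps He. destruct (geometric_small s K eps Hs HK He) as [N HN].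
    exists N. intros n y Hn Hy.
    destruct (series_geometric (fun n => D m' n y) s K Hs) as [_ Ht];
      [intros; apply HB; auto|].
    eapply Rle_lt_trans; [apply Ht| auto]. }
  assert (Hderiv : forall m', (m' < J)%nat -> forall y N, Boule x ball y ->
            derivable_pt_lim (fun z => fsum (fun n => D m' n z) N) y
                             (fsum (fun n => D (S m') n y) N)).
  { intros m' Hm' y N Hy. apply (derivable_pt_lim_fsum (fun n => D m' n) (fun n => D (S m') n)).
    intros j _. apply HJ; auto. }
  apply (derivable_pt_lim_CVU (fun N y => fsum (fun n => D m n y) N)
           (fun N y => fsum (fun n => D (S m) n y) N) (fun y => series (fun n => D m n y))
           (fun y => series (fun n => D (S m) n y)) x x ball).
  - apply Boule_center.
  - intros y N Hy. apply Hderiv; auto; lia.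
  - intros y Hy. apply (series_geometric (fun n => D m n y) s K Hs).
    intros; apply HB; auto; lia.
  - apply Hcvu; lia.
  - intros y Hy. apply (CVU_continuity (fun N y => fsum (fun n => D (S m) n y) N)
                           (fun y => series (fun n => D (S m) n y)) x ball); auto; [apply Hcvu; lia|].
    intros N z Hz. apply derivable_continuous_pt.
    exists (fsum (fun n => D (S (S m)) n z) N). apply Hderiv; auto; lia.
Qed.

End SeriesJet.

(** * The implicit parameter [u_s = t_s / s] *)

Lemma pow_le_1 x n : 0 <= x <= 1 -> x ^ n <= 1.
Proof. intros H. rewrite <- (pow1 n). apply pow_incr; lra. Qed.

Definition pow_quot (x y : R) (j : nat) : R := fsum (fun i => x ^ i * y ^ (j - 1 - i)) j.

Lemma pow_sub_factor x y j : x ^ j - y ^ j = (x - y) * pow_quot x y j.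
Proof.
  assert (HS : forall j, pow_quot x y (S j) = y * pow_quot x y j + x ^ j).
  { intros k. unfold pow_quot. simpl. rewrite <- fsum_scal. f_equal.
    - apply fsum_ext. intros i Hi. replace (k - 0 - i)%nat with (S (k - 1 - i)) by lia. simpl; ring.
    - replace (k - 0 - k)%nat with O by lia. simpl; ring. }
  induction j as [|j IH]; [unfold pow_quot; simpl; ring|].
  rewrite HS. simpl.
  replace (x * x ^ j - y * y ^ j) with (y * (x ^ j - y ^ j) + (x - y) * x ^ j) by ring.
  rewrite IH. ring.
Qed.

Lemma pow_quot_nonneg x y j : 0 <= x -> 0 <= y -> 0 <= pow_quot x y j.
Proof. intros. apply fsum_nonneg. intros. apply Rmult_le_pos; apply pow_le; auto. Qed.

Section Polynomial.

Variables (d : nat) (a : nat -> nat).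
Hypothesis hd : (1 <= d)%nat.
Hypothesis ha : forall j, (j <= d)%nat -> (1 <= a j)%nat.

Definition poly (x : R) : R := fsum (fun j => INR (a j) * x ^ j) (S d).

(* The divided difference [(p x - p y) / (x - y)]. *)
Definition poly_quot (x y : R) : R := fsum (fun j => INR (a j) * pow_quot x y j) (S d).

Lemma a_ge1 j : (j <= d)%nat -> 1 <= INR (a j).
Proof. intros H. apply (le_INR 1). auto. Qed.

Lemma poly_sub_factor x y : poly x - poly y = (x - y) * poly_quot x y.
Proof.
  unfold poly, poly_quot. rewrite <- fsum_scal.
  replace (fsum (fun j => INR (a j) * x ^ j) (S d) - fsum (fun j => INR (a j) * y ^ j) (S d))
    with (fsum (fun j => INR (a j) * x ^ j + (-1) * (INR (a j) * y ^ j)) (S d))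
    by (rewrite fsum_plus, fsum_scal; ring).
  apply fsum_ext. intros j _.
  replace ((x - y) * (INR (a j) * pow_quot x y j)) with (INR (a j) * ((x - y) * pow_quot x y j))
    by ring.
  rewrite <- (pow_sub_factor x y j). ring.
Qed.

Lemma poly_quot_ge1 x y : 0 <= x -> 0 <= y -> 1 <= poly_quot x y.
Proof.
  intros Hx Hy.
  apply Rle_trans with (INR (a 1) * pow_quot x y 1).
  - unfold pow_quot; simpl. assert (1 <= INR (a 1)) by (apply a_ge1; lia). lra.
  - apply (fsum_term_le (fun j => INR (a j) * pow_quot x y j)); [|lia].
    intros; apply Rmult_le_pos; [apply pos_INR| apply pow_quot_nonneg; auto].
Qed.

Lemma poly_quot_continuous c z : continuity_pt (fun z => poly_quot z c) z.
Proof.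
  apply (continuity_pt_fsum (fun j z => INR (a j) * pow_quot z c j)). intros j _.
  apply continuity_pt_mult; [apply continuity_pt_const; intros ? ?; reflexivity|].
  apply (continuity_pt_fsum (fun i z => z ^ i * c ^ (j - 1 - i))). intros.
  apply continuity_pt_mult; [|apply continuity_pt_const; intros ? ?; reflexivity].
  apply derivable_continuous_pt, derivable_pt_pow.
Qed.

Lemma INR_rr : INR (rr d a) = fsum (fun j => INR (a j)) (S d).
Proof. apply INR_fold_right_add. Qed.

Lemma rr_ge2 : (2 <= rr d a)%nat.
Proof.
  apply INR_le. replace (INR 2) with 2 by (simpl; ring). rewrite INR_rr.
  apply Rle_trans with (INR (a O) + INR (a d)).
  - assert (1 <= INR (a O)) by (apply a_ge1; lia). assert (1 <= INR (a d)) by (apply a_ge1; lia). lra.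
  - apply (fsum_two_terms_le (fun j => INR (a j))); try lia. intros; apply pos_INR.
Qed.

Lemma a0_s_lt1 s : 0 < s < 1 / INR (a O) -> INR (a O) * s < 1.
Proof.
  intros [_ Hs]. assert (1 <= INR (a O)) by (apply a_ge1; lia).
  apply Rmult_lt_reg_l with (/ INR (a O)); [apply Rinv_0_lt_compat; lra|].
  rewrite <- Rmult_assoc, Rinv_l, Rmult_1_l, Rmult_1_r by lra. lra.
Qed.

Lemma fsum_at_0 (c : nat -> R) n : fsum (fun j => c j * 0 ^ j) (S n) = c O.
Proof. induction n as [|n IH]; [simpl; ring|]. simpl fsum in *. rewrite IH. simpl; ring. Qed.

Lemma t_eq_exists s : 0 < s < 1 / INR (a O) -> exists t, t_eq d a s t.
Proof.
  intros Hs.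
  set (Phi t := sum_f_R0 (fun j => INR (a j) * s ^ (d - j) * t ^ j) d - s ^ (d - 1)).
  assert (Has := a0_s_lt1 s Hs). assert (1 <= INR (a O)) by (apply a_ge1; lia).
  assert (Hpd : 0 < s ^ (d - 1)) by (apply pow_lt; lra).
  assert (Hsd : s ^ d = s * s ^ (d - 1)) by (replace d with (S (d - 1)) at 1 by lia; auto).
  assert (H0 : Phi 0 < 0).
  { unfold Phi. rewrite sum_f_R0_fsum.
    replace (fsum (fun j => INR (a j) * s ^ (d - j) * 0 ^ j) (S d)) with (INR (a O) * s ^ (d - 0))
      by (symmetry; apply (fsum_at_0 (fun j => INR (a j) * s ^ (d - j)))).
    rewrite Nat.sub_0_r, Hsd. nra. }
  assert (H1 : 0 < Phi 1).
  { unfold Phi. rewrite sum_f_R0_fsum.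
    assert (HH : INR (a O) * s ^ (d - 0) * 1 ^ 0 + INR (a d) * s ^ (d - d) * 1 ^ d
                 <= fsum (fun j => INR (a j) * s ^ (d - j) * 1 ^ j) (S d)).
    { apply (fsum_two_terms_le (fun j => INR (a j) * s ^ (d - j) * 1 ^ j)); try lia.
      intros; rewrite pow1, Rmult_1_r. apply Rmult_le_pos; [apply pos_INR| apply pow_le; lra]. }
    rewrite Nat.sub_diag, !pow1, Nat.sub_0_r, pow_O in HH.
    assert (1 <= INR (a d)) by (apply a_ge1; lia).
    assert (s ^ (d - 1) <= 1) by (apply pow_le_1; nra).
    assert (0 < s ^ d) by (apply pow_lt; lra).
    nra. }
  assert (Hc : continuity Phi).
  { apply continuity_minus; [apply continuity_finite_sum| apply continuity_const; intros ? ?; reflexivity]. }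
  destruct (IVT_cor Phi 0 1 Hc) as [z [Hz HPz]]; [lra| nra|].
  exists z. split; [split|].
  - destruct (Req_dec z 0) as [E|E]; [rewrite E in HPz; lra| lra].
  - destruct (Req_dec z 1) as [E|E]; [rewrite E in HPz; lra| lra].
  - unfold Phi in HPz. lra.
Qed.

Lemma tq_spec s : 0 < s < 1 / INR (a O) -> t_eq d a s (tq d a s).
Proof.
  intros Hs. apply (epsilon_spec (inhabits 0) (fun t => t_eq d a s t)). apply t_eq_exists; auto.
Qed.

Definition uq (s : R) : R := tq d a s / s.

Lemma uq_pos s : 0 < s < 1 / INR (a O) -> 0 < uq s.
Proof. intros Hs. destruct (tq_spec s Hs) as [[Ht _] _]. apply Rdiv_lt_0_compat; lra. Qed.

(* Dividing the defining equation of [t_s] by [s^d]. *)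
Lemma poly_uq s : 0 < s < 1 / INR (a O) -> poly (uq s) = / s.
Proof.
  intros Hs. destruct (tq_spec s Hs) as [_ Heq].
  replace (tq d a s) with (s * uq s) in Heq by (unfold uq; field; lra).
  rewrite sum_f_R0_fsum in Heq.
  rewrite (fsum_ext _ (fun j => s ^ d * (INR (a j) * uq s ^ j))) in Heq.
  - rewrite fsum_scal in Heq. fold (poly (uq s)) in Heq.
    assert (Hsd : s ^ d = s * s ^ (d - 1)) by (replace d with (S (d - 1)) at 1 by lia; auto).
    assert (0 < s ^ (d - 1)) by (apply pow_lt; lra).
    rewrite Hsd in Heq. apply Rmult_eq_reg_l with (s * s ^ (d - 1)); [|nra].
    rewrite Heq. field. lra.
  - intros j Hj. rewrite Rpow_mult_distr.
    replace (s ^ d) with (s ^ (d - j) * s ^ j) by (rewrite <- pow_add; f_equal; lia). ring.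
Qed.

Lemma uq_le_inv s : 0 < s < 1 / INR (a O) -> uq s <= / s.
Proof.
  intros Hs. rewrite <- poly_uq by auto. assert (Hu := uq_pos s Hs).
  apply Rle_trans with (INR (a 1) * uq s ^ 1).
  - simpl. assert (1 <= INR (a 1)) by (apply a_ge1; lia). nra.
  - apply (fsum_term_le (fun j => INR (a j) * uq s ^ j)); [|lia].
    intros; apply Rmult_le_pos; [apply pos_INR| apply pow_le; lra].
Qed.

(* If [u < 1] then [1/s = p(u) <= a_0 + r u]. *)
Lemma uq_lower s : 0 < s < 1 / INR (a O) -> Rmin 1 ((/ s - INR (a O)) / INR (rr d a)) <= uq s.
Proof.
  intros Hs. assert (Hu := uq_pos s Hs).
  destruct (Rle_lt_dec 1 (uq s)) as [H1|H1]; [apply Rle_trans with 1; [apply Rmin_l| auto]|].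
  apply Rle_trans with ((/ s - INR (a O)) / INR (rr d a)); [apply Rmin_r|].
  assert (Hr : 0 < INR (rr d a)) by (apply lt_0_INR; assert (H := rr_ge2); lia).
  apply Rmult_le_reg_r with (INR (rr d a)); auto.
  unfold Rdiv. rewrite Rmult_assoc, Rinv_l, Rmult_1_r by lra.
  rewrite <- poly_uq, INR_rr, <- fsum_scal by auto. unfold poly.
  change (S d) with (1 + d)%nat. rewrite !fsum_add. simpl.
  assert (fsum (fun j => INR (a (S j)) * (uq s * uq s ^ j)) d <= fsum (fun j => uq s * INR (a (S j))) d).
  { apply fsum_le. intros j _. assert (0 <= INR (a (S j))) by apply pos_INR.
    assert (uq s ^ j <= 1) by (apply pow_le_1; lra).
    assert (0 <= uq s * INR (a (S j))) by (apply Rmult_le_pos; lra).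
    rewrite <- (Rmult_1_r (uq s * INR (a (S j)))). nra. }
  assert (0 <= INR (a O)) by apply pos_INR. nra.
Qed.

Lemma uq_sub y s : 0 < y < 1 / INR (a O) -> 0 < s < 1 / INR (a O) ->
  uq y - uq s = (/ y - / s) / poly_quot (uq y) (uq s).
Proof.
  intros Hy Hs.
  assert (Hq := poly_quot_ge1 (uq y) (uq s) (Rlt_le _ _ (uq_pos y Hy)) (Rlt_le _ _ (uq_pos s Hs))).
  rewrite <- (poly_uq y Hy), <- (poly_uq s Hs), poly_sub_factor. field. lra.
Qed.

Lemma uq_continuous s : 0 < s < 1 / INR (a O) -> continuity_pt uq s.
Proof.
  intros Hs. apply continuity_pt_eps. intros eps He.
  set (del := Rmin (s / 2) (Rmin (eps * s * s / 2) (1 / INR (a O) - s))).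
  assert (H1 := Rmin_l (s / 2) (Rmin (eps * s * s / 2) (1 / INR (a O) - s))).
  assert (H2 := Rmin_r (s / 2) (Rmin (eps * s * s / 2) (1 / INR (a O) - s))).
  assert (H3 := Rmin_l (eps * s * s / 2) (1 / INR (a O) - s)).
  assert (H4 := Rmin_r (eps * s * s / 2) (1 / INR (a O) - s)).
  assert (Hess : 0 < eps * s * s) by (repeat apply Rmult_lt_0_compat; lra).
  exists del. split; [unfold del; repeat apply Rmin_pos; lra|].
  intros y Hy. fold del in H1, H2. apply Rabs_def2 in Hy.
  assert (Hyd : 0 < y < 1 / INR (a O)) by lra.
  rewrite uq_sub by auto.
  assert (Hq := poly_quot_ge1 (uq y) (uq s) (Rlt_le _ _ (uq_pos y Hyd)) (Rlt_le _ _ (uq_pos s Hs))).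
  unfold Rdiv. rewrite Rabs_mult, Rabs_inv, (Rabs_right (poly_quot _ _)) by lra.
  apply Rle_lt_trans with (Rabs (/ y - / s)).
  { assert (0 <= Rabs (/ y - / s)) by apply Rabs_pos.
    assert (/ poly_quot (uq y) (uq s) <= 1) by (rewrite <- Rinv_1; apply Rinv_le_contravar; lra).
    assert (0 < / poly_quot (uq y) (uq s)) by (apply Rinv_0_lt_compat; lra). nra. }
  replace (/ y - / s) with ((s - y) / (s * y)) by (field; lra).
  unfold Rdiv. rewrite Rabs_mult, Rabs_inv, (Rabs_right (s * y)) by nra.
  apply Rmult_lt_reg_r with (s * y); [nra|]. rewrite Rmult_assoc, Rinv_l, Rmult_1_r by nra.
  apply Rabs_def1; nra.
Qed.

Definition uq' (s : R) : R := - / (s * s) * / poly_quot (uq s) (uq s).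

Lemma uq_derivable s : 0 < s < 1 / INR (a O) -> derivable_pt_lim uq s (uq' s).
Proof.
  intros Hs. assert (Hu := uq_pos s Hs).
  apply (derivable_pt_lim_slope uq (fun y => - / (s * y) * / poly_quot (uq y) (uq s))).
  - exists (Rmin s (1 / INR (a O) - s)); split; [apply Rmin_pos; lra|].
    intros y Hy. assert (H1 := Rmin_l s (1 / INR (a O) - s)). assert (H2 := Rmin_r s (1 / INR (a O) - s)).
    apply Rabs_def2 in Hy. assert (Hyd : 0 < y < 1 / INR (a O)) by lra.
    assert (Hq := poly_quot_ge1 (uq y) (uq s) (Rlt_le _ _ (uq_pos y Hyd)) (Rlt_le _ _ Hu)).
    rewrite uq_sub by auto. field. repeat split; lra.
  - assert (Hq := poly_quot_ge1 (uq s) (uq s) (Rlt_le _ _ Hu) (Rlt_le _ _ Hu)).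
    apply continuity_pt_mult; [apply continuity_pt_opp|]; apply continuity_pt_inv.
    + apply continuity_pt_mult; [apply continuity_pt_const; intros ? ?; reflexivity|].
      apply derivable_continuous_pt, derivable_pt_id.
    + apply Rmult_integral_contrapositive; split; lra.
    + apply (continuity_pt_comp uq (fun z => poly_quot z (uq s))).
      * apply uq_continuous; auto.
      * apply poly_quot_continuous.
    + unfold comp. lra.
Qed.

Section OnInterval.

Variables lo hi : R.
Hypothesis Hlo : 0 < lo.
Hypothesis Hhi : hi < 1 / INR (a O).

Let in_domain s : lo < s < hi -> 0 < s < 1 / INR (a O).
Proof. intros; lra. Qed.

(* By induction on [J], since [u'] is a rational expression in [s] and [u]. *)
Lemma uq_dominated {I} J :
  dominated lo hi J (fun (_ : I) s => uq s) (fun _ => 1) /\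
  dominated lo hi J (fun (_ : I) s => uq' s) (fun _ => 1).
Proof.
  assert (Hb : bounded_by lo hi (fun (_ : I) s => uq s) (fun _ => 1)).
  { exists (/ lo). intros i s Hs. rewrite Rmult_1_r. assert (Hd := in_domain s Hs).
    rewrite Rabs_right by (apply Rle_ge, Rlt_le, uq_pos; auto).
    eapply Rle_trans; [apply uq_le_inv; auto|]. apply Rinv_le_contravar; lra. }
  assert (Hu' : forall J, dominated lo hi J (fun (_ : I) s => uq s) (fun _ => 1) ->
                          dominated lo hi J (fun (_ : I) s => uq' s) (fun _ => 1)).
  { intros J' Hu. unfold uq'. apply dominated_mult1.
    - apply (dominated_ext _ _ J' (fun _ s => -1 * / (s * s))); [intros; field; lra|].
      apply dominated_mult1; [apply dominated_const1|].
      apply (dominated_inv _ _ J' (fun _ s => s * s) (lo * lo)); [nra| |].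
      + intros i s Hs. rewrite Rabs_right; nra.
      + apply dominated_mult1; apply dominated_id.
    - apply (dominated_inv _ _ J' (fun _ s => poly_quot (uq s) (uq s)) 1); [lra| |].
      + intros i s Hs. assert (Hd := in_domain s Hs). assert (Hp := uq_pos s Hd).
        assert (Hq := poly_quot_ge1 (uq s) (uq s) (Rlt_le _ _ Hp) (Rlt_le _ _ Hp)).
        rewrite Rabs_right; lra.
      + apply (dominated_fsum _ _ J' (fun j (_ : I) s => INR (a j) * pow_quot (uq s) (uq s) j));
          [intros; lra|].
        intros j _. apply dominated_mult1; [apply dominated_const1|].
        apply (dominated_fsum _ _ J' (fun i (_ : I) s => uq s ^ i * uq s ^ (j - 1 - i)));
          [intros; lra|].
        intros i _. apply dominated_mult1.
        * apply (dominated_pow _ _ J' _ (fun _ => i) i); auto.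
        * apply (dominated_pow _ _ J' _ (fun _ => (j - 1 - i)%nat) (j - 1 - i)); auto. }
  cut (dominated lo hi J (fun (_ : I) s => uq s) (fun _ => 1)); [split; auto|].
  induction J as [|J IH]; split; auto.
  exists (fun _ s => uq' s). split; [intros; apply uq_derivable, in_domain; auto| auto].
Qed.

End OnInterval.

End Polynomial.

(** * Digit probabilities and cylinder measures *)

Lemma tau_count_S r tau j :
  tau_count (S r) tau j = (tau_count r tau j + if Nat.eqb (tau r) j then 1 else 0)%nat.
Proof.
  unfold tau_count. rewrite seq_S, filter_app, length_app. simpl.
  destruct (Nat.eqb (tau r) j); simpl; lia.
Qed.

Lemma fsum_indicator (F : nat -> R) k N : (k < N)%nat ->
  fsum (fun j => if Nat.eqb k j then F j else 0) N = F k.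
Proof.
  induction N as [|N IH]; intros Hk; [lia|]. simpl.
  destruct (Nat.eqb_spec k N) as [->|Hne].
  - rewrite (fsum_ext _ (fun _ => 0)), fsum_zero; [ring|].
    intros j Hj. destruct (Nat.eqb_spec N j); [lia| auto].
  - rewrite IH by lia. ring.
Qed.

Lemma fsum_tau_count (tau : nat -> nat) (F : nat -> R) d n :
  (forall b, (b < n)%nat -> (tau b <= d)%nat) ->
  fsum (fun b => F (tau b)) n = fsum (fun j => INR (tau_count n tau j) * F j) (S d).
Proof.
  induction n as [|n IH]; intros H.
  - simpl. rewrite (fsum_ext _ (fun _ => 0)), fsum_zero; [ring|]. intros; simpl; ring.
  - simpl (fsum (fun b => F (tau b)) (S n)). rewrite IH by (intros; apply H; lia).
    rewrite (fsum_ext (fun j => INR (tau_count (S n) tau j) * F j)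
               (fun j => INR (tau_count n tau j) * F j + (if Nat.eqb (tau n) j then F j else 0))).
    + rewrite fsum_plus, fsum_indicator; [reflexivity|]. specialize (H n). lia.
    + intros j _. rewrite tau_count_S, plus_INR. destruct (Nat.eqb (tau n) j); simpl; ring.
Qed.

Lemma bernoulli_ineq l n : 1 < l -> INR n * (l - 1) <= l ^ n.
Proof.
  intros Hl. induction n as [|n IH]; [simpl; lra|].
  rewrite S_INR. simpl (l ^ S n). assert (1 <= l ^ n) by (apply pow_R1_Rle; lra). nra.
Qed.

Lemma dominated_fsum_length lo hi J (g : nat -> R -> R) l : 1 < l ->
  dominated lo hi J g (fun _ => 1) ->
  dominated lo hi J (fun (en : (nat -> nat) * nat) s => fsum (fun j => g (fst en (S j)) s) (snd en))
    (fun en => l ^ snd en).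
Proof.
  intros Hl. revert g; induction J as [|J IH]; intros g [[K HK] Hg].
  all: assert (Hb : bounded_by lo hi
                 (fun (en : (nat -> nat) * nat) s => fsum (fun j => g (fst en (S j)) s) (snd en))
                 (fun en => l ^ snd en)).
  all: try (exists (Rabs K / (l - 1)); intros [e n] s Hs; simpl;
    eapply Rle_trans; [apply Rabs_fsum_le|];
    apply Rle_trans with (fsum (fun _ => Rabs K) n);
    [apply fsum_le; intros j _; eapply Rle_trans; [apply HK; auto| rewrite Rmult_1_r; apply RRle_abs]|];
    rewrite <- (Rmult_1_r (Rabs K)), fsum_scal;
    replace (fsum (fun _ => 1) n) with (INR n)
      by (clear; induction n as [|n IH]; [reflexivity| rewrite S_INR, IH; reflexivity]);
    assert (H1 := bernoulli_ineq l n Hl); assert (0 <= Rabs K) by apply Rabs_pos;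
    unfold Rdiv; apply Rmult_le_reg_r with (l - 1); [lra|];
    replace (Rabs K * 1 * / (l - 1) * l ^ n * (l - 1)) with (Rabs K * l ^ n) by (field; lra); nra).
  all: split; auto.
  destruct Hg as [g' [Hg1 Hg2]].
  exists (fun en s => fsum (fun j => g' (fst en (S j)) s) (snd en)). split.
  - intros [e n] s Hs. apply (derivable_pt_lim_fsum (fun j => g (e (S j))) (fun j => g' (e (S j)))).
    auto.
  - apply IH; auto.
Qed.

Section DigitProbabilities.

Variables (d : nat) (a tau : nat -> nat).
Hypothesis hd : (1 <= d)%nat.
Hypothesis ha : forall j, (j <= d)%nat -> (1 <= a j)%nat.
Hypothesis htau_range : forall b, (b < rr d a)%nat -> (tau b <= d)%nat.
Hypothesis htau_count : forall j, (j <= d)%nat -> tau_count (rr d a) tau j = a j.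

Local Notation r := (rr d a).
Local Notation uq := (uq d a).

Lemma piq_uq s b : 0 < s < 1 / INR (a O) -> piq d a tau s b = s * uq s ^ tau b.
Proof.
  intros Hs. unfold piq. replace (tq d a s) with (s * uq s) by (unfold uq; field; lra).
  rewrite Rpow_mult_distr. field. apply pow_nonzero; lra.
Qed.

Lemma piq_nonneg s b : 0 < s < 1 / INR (a O) -> 0 <= piq d a tau s b.
Proof.
  intros Hs. rewrite piq_uq by auto.
  apply Rmult_le_pos; [lra| apply pow_le, Rlt_le, uq_pos; auto].
Qed.

Lemma piq_sum s : 0 < s < 1 / INR (a O) -> fsum (fun b => piq d a tau s b) r = 1.
Proof.
  intros Hs.
  rewrite (fsum_ext _ (fun b => (fun j => s * uq s ^ j) (tau b))) by (intros; apply piq_uq; auto).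
  rewrite (fsum_tau_count tau (fun j => s * uq s ^ j) d) by auto.
  rewrite (fsum_ext _ (fun j => s * (INR (a j) * uq s ^ j))).
  - rewrite fsum_scal. fold (poly d a (uq s)). rewrite poly_uq by auto. field; lra.
  - intros j Hj. rewrite htau_count by lia. ring.
Qed.

Lemma cq_fsum s b : cq d a tau s b = fsum (fun j => piq d a tau s j) b.
Proof. apply fold_right_Rplus_fsum. Qed.

(* Digits are clamped to [0, r-1] so that families may be indexed by arbitrary
   [e : nat -> nat]; genuine r-adic digits are left unchanged. *)
Definition clamp (b : nat) : nat := Nat.min b (r - 1).

Definition pi_d (b : nat) (s : R) : R := piq d a tau s (clamp b).
Definition c_d (b : nat) (s : R) : R := cq d a tau s (clamp b).
Definition pi_d' (b : nat) (s : R) : R :=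
  uq s ^ tau (clamp b) + s * (INR (tau (clamp b)) * uq s ^ pred (tau (clamp b)) * uq' d a s).

Lemma clamp_lt b : (clamp b < r)%nat.
Proof. unfold clamp. assert (H := rr_ge2 d a hd ha). lia. Qed.

Lemma clamp_id b : (b < r)%nat -> clamp b = b.
Proof. unfold clamp. lia. Qed.

Lemma tau_clamp b : (tau (clamp b) <= d)%nat.
Proof. apply htau_range, clamp_lt. Qed.

Lemma pi_d_uq b s : 0 < s < 1 / INR (a O) -> pi_d b s = s * uq s ^ tau (clamp b).
Proof. intros; apply piq_uq; auto. Qed.

Lemma pi_d_derivable b s : 0 < s < 1 / INR (a O) -> derivable_pt_lim (pi_d b) s (pi_d' b s).
Proof.
  intros Hs. apply (derivable_pt_lim_near_ext (fun y => y * uq y ^ tau (clamp b))).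
  - exists (Rmin s (1 / INR (a O) - s)); split; [apply Rmin_pos; lra|].
    intros y Hy. assert (H1 := Rmin_l s (1 / INR (a O) - s)). assert (H2 := Rmin_r s (1 / INR (a O) - s)).
    apply Rabs_def2 in Hy. rewrite pi_d_uq; auto; lra.
  - replace (pi_d' b s) with (1 * uq s ^ tau (clamp b) +
      s * (INR (tau (clamp b)) * uq s ^ pred (tau (clamp b)) * uq' d a s)) by (unfold pi_d'; ring).
    apply derivable_pt_lim_mult; [apply derivable_pt_lim_id|].
    apply derivable_pt_lim_pow_fun, uq_derivable; auto.
Qed.

Definition cyl_prob (en : (nat -> nat) * nat) (s : R) : R := pprod (fun j => pi_d (fst en j) s) (snd en).

Definition cyl_logderiv (en : (nat -> nat) * nat) (s : R) : R :=
  fsum (fun j => pi_d' (fst en (S j)) s / pi_d (fst en (S j)) s) (snd en).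

Definition cyl_term (en : (nat -> nat) * nat) (s : R) : R :=
  cyl_prob en s * c_d (fst en (S (snd en))) s.

Section OnInterval.

Variables lo hi : R.
Hypothesis Hlo : 0 < lo.
Hypothesis Hlohi : lo < hi.
Hypothesis Hhi : hi < 1 / INR (a O).

Let in_domain s : lo < s < hi -> 0 < s < 1 / INR (a O).
Proof. intros; lra. Qed.

Definition uq_min : R := Rmin 1 ((/ hi - INR (a O)) / INR r).
Definition pi_min : R := lo * uq_min ^ d.
Definition pi_max : R := 1 - pi_min.

Lemma uq_min_pos : 0 < uq_min.
Proof.
  unfold uq_min. apply Rmin_pos; [lra|].
  assert (Hr : 0 < INR r) by (apply lt_0_INR; assert (H := rr_ge2 d a hd ha); lia).
  apply Rdiv_lt_0_compat; auto.
  assert (H := a0_s_lt1 d a hd ha hi ltac:(lra)).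
  apply Rmult_lt_reg_r with hi; [lra|]. rewrite Rmult_minus_distr_r, Rinv_l by lra. lra.
Qed.

Lemma pi_min_pos : 0 < pi_min.
Proof. apply Rmult_lt_0_compat; [lra| apply pow_lt, uq_min_pos]. Qed.

Lemma pi_d_lower b s : lo < s < hi -> pi_min <= pi_d b s.
Proof.
  intros Hs. assert (Hd := in_domain s Hs). rewrite pi_d_uq by auto.
  assert (Hu : uq_min <= uq s).
  { eapply Rle_trans; [|apply uq_lower; auto]. unfold uq_min.
    assert (Hr : 0 < INR r) by (apply lt_0_INR; assert (H := rr_ge2 d a hd ha); lia).
    assert (/ hi <= / s) by (apply Rinv_le_contravar; lra).
    assert ((/ hi - INR (a O)) / INR r <= (/ s - INR (a O)) / INR r)
      by (apply Rmult_le_compat_r; [apply Rlt_le, Rinv_0_lt_compat; auto| lra]).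
    unfold Rmin. repeat destruct Rle_dec; lra. }
  assert (Hum := uq_min_pos). assert (Hum1 : uq_min <= 1) by apply Rmin_l.
  apply Rmult_le_compat; [lra| apply pow_le; lra| lra|].
  apply Rle_trans with (uq_min ^ tau (clamp b)).
  - replace d with (tau (clamp b) + (d - tau (clamp b)))%nat at 1 by (assert (H := tau_clamp b); lia).
    rewrite pow_add. assert (uq_min ^ (d - tau (clamp b)) <= 1) by (apply pow_le_1; lra).
    assert (0 <= uq_min ^ tau (clamp b)) by (apply pow_le; lra). nra.
  - apply pow_incr; lra.
Qed.

(* Every digit has probability at least [pi_min] and there are at least two digits. *)
Lemma pi_d_upper b s : lo < s < hi -> pi_d b s <= pi_max.
Proof.
  intros Hs. assert (Hd := in_domain s Hs). unfold pi_max, pi_d.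
  set (c := clamp b). set (c' := if Nat.eqb c 0 then 1%nat else 0%nat).
  assert (Hr2 := rr_ge2 d a hd ha). assert (Hc := clamp_lt b).
  assert (Hc' : (c' < r)%nat) by (unfold c'; destruct (Nat.eqb c 0); lia).
  assert (pi_min <= piq d a tau s c').
  { replace c' with (clamp c') by (apply clamp_id; auto). apply pi_d_lower; auto. }
  assert (piq d a tau s c + piq d a tau s c' <= 1).
  { rewrite <- (piq_sum s Hd). apply fsum_two_terms_le; auto.
    - intros; apply piq_nonneg; auto.
    - unfold c'; destruct (Nat.eqb_spec c 0); lia. }
  lra.
Qed.

Lemma pi_max_bounds : 0 < pi_max < 1.
Proof.
  assert (Hm : lo < (lo + hi) / 2 < hi) by lra.
  assert (H1 := pi_d_lower 0 _ Hm). assert (H2 := pi_d_upper 0 _ Hm).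
  assert (H3 := pi_min_pos). unfold pi_max in *. lra.
Qed.

Lemma pi_d_dominated J : dominated lo hi J pi_d (fun _ => 1).
Proof.
  apply (dominated_ext _ _ J (fun b s => s * uq s ^ tau (clamp b))).
  - intros b s Hs. symmetry; apply pi_d_uq, in_domain; auto.
  - apply dominated_mult1; [apply dominated_id|].
    apply (dominated_pow _ _ J (fun _ s => uq s) (fun b => tau (clamp b)) d); [intros; apply tau_clamp|].
    apply uq_dominated; auto.
Qed.

Lemma pi_d'_dominated J : dominated lo hi J pi_d' (fun _ => 1).
Proof.
  destruct (uq_dominated d a hd ha lo hi Hlo Hhi (I := nat) J) as [Hu Hu'].
  unfold pi_d'. apply dominated_plus.
  - apply (dominated_pow _ _ J (fun _ s => uq s) (fun b => tau (clamp b)) d); auto.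
    intros; apply tau_clamp.
  - apply dominated_mult1; [apply dominated_id|].
    apply dominated_mult1; [apply dominated_mult1| exact Hu'].
    + apply dominated_const; [intros; lra|]. exists (INR d). intros b.
      rewrite Rabs_right, Rmult_1_r by (apply Rle_ge, pos_INR). apply le_INR, tau_clamp.
    + apply (dominated_pow _ _ J (fun _ s => uq s) (fun b => pred (tau (clamp b))) d); auto.
      intros i; assert (H := tau_clamp i); lia.
Qed.

Lemma cyl_prob_derivable en s : lo < s < hi ->
  derivable_pt_lim (cyl_prob en) s (cyl_prob en s * cyl_logderiv en s).
Proof.
  intros Hs. destruct en as [e n]. unfold cyl_prob, cyl_logderiv; simpl.
  induction n as [|n IH]; simpl.
  - replace (1 * 0) with 0 by ring. apply derivable_pt_lim_const.
  - assert (Hp := pi_d_derivable (e (S n)) s (in_domain s Hs)).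
    assert (Hl := pi_d_lower (e (S n)) s Hs). assert (Hm := pi_min_pos).
    set (P := pprod (fun j => pi_d (e j) s) n).
    set (L := fsum (fun j => pi_d' (e (S j)) s / pi_d (e (S j)) s) n).
    replace (P * pi_d (e (S n)) s * (L + pi_d' (e (S n)) s / pi_d (e (S n)) s))
      with (P * L * pi_d (e (S n)) s + P * pi_d' (e (S n)) s) by (field; lra).
    apply (derivable_pt_lim_mult (fun y => pprod (fun j => pi_d (e j) y) n) (pi_d (e (S n)))); auto.
Qed.

Lemma cyl_prob_bounds en s : lo < s < hi -> 0 <= cyl_prob en s <= pi_max ^ snd en.
Proof.
  intros Hs. destruct en as [e n]. unfold cyl_prob; simpl. induction n as [|n IH]; simpl; [lra|].
  assert (H1 := pi_d_lower (e (S n)) s Hs). assert (H2 := pi_d_upper (e (S n)) s Hs).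
  assert (Hm := pi_min_pos). split; [nra|].
  rewrite Rmult_comm. apply Rmult_le_compat; lra.
Qed.

(* [P' = P L] with [L] a sum of [n] bounded terms, so each differentiation costs a
   factor [(sg / sg1) ^ n], absorbed by any [sg > pi_max]. *)
Lemma cyl_prob_dominated J sg : pi_max < sg -> dominated lo hi J cyl_prob (fun en => sg ^ snd en).
Proof.
  assert (Hr := pi_max_bounds). revert sg.
  induction J as [|J IH]; intros sg Hsg.
  all: assert (Hb : bounded_by lo hi cyl_prob (fun en => sg ^ snd en))
         by (exists 1; intros en s Hs; rewrite Rmult_1_l;
             destruct (cyl_prob_bounds en s Hs) as [H1 H2]; rewrite Rabs_right by lra;
             eapply Rle_trans; [exact H2| apply pow_incr; lra]).
  all: split; auto.
  exists (fun en s => cyl_prob en s * cyl_logderiv en s). split; [intros; apply cyl_prob_derivable; auto|].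
  set (sg1 := (pi_max + sg) / 2).
  assert (Hsg1 : 0 < sg1) by (unfold sg1; lra). assert (Hq : 1 < sg / sg1).
  { apply Rmult_lt_reg_r with sg1; auto. unfold Rdiv. rewrite Rmult_assoc, Rinv_l by lra.
    unfold sg1; lra. }
  apply (dominated_weaken _ _ J _ (fun en => sg1 ^ snd en * (sg / sg1) ^ snd en) _ 1).
  - intros en. apply Rmult_le_pos; apply pow_le; lra.
  - intros en. rewrite <- Rpow_mult_distr, Rmult_1_l.
    replace (sg1 * (sg / sg1)) with sg by (field; lra). lra.
  - apply dominated_mult; try (intros; apply pow_le; lra); [apply IH; unfold sg1; lra|].
    apply (dominated_fsum_length lo hi J (fun b s => pi_d' b s / pi_d b s)); auto.
    apply dominated_mult1; [apply pi_d'_dominated|].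
    apply (dominated_inv _ _ J pi_d pi_min); [apply pi_min_pos| |apply pi_d_dominated].
    intros b s Hs. assert (H := pi_d_lower b s Hs). assert (H0 := pi_min_pos).
    rewrite Rabs_right; lra.
Qed.

Lemma c_d_fsum b s : c_d b s = fsum (fun j => (if Nat.ltb j (clamp b) then 1 else 0) * pi_d j s) r.
Proof.
  unfold c_d. rewrite cq_fsum. assert (Hc := clamp_lt b).
  replace r with (clamp b + (r - clamp b))%nat at 1 by lia. rewrite fsum_add.
  rewrite (fsum_ext (fun j => _ * pi_d (clamp b + j)%nat s) (fun _ => 0)), fsum_zero.
  - rewrite Rplus_0_r. apply fsum_ext. intros j Hj.
    destruct (Nat.ltb_spec j (clamp b)); [|lia]. unfold pi_d. rewrite clamp_id by lia. ring.
  - intros j _. destruct (Nat.ltb_spec (clamp b + j) (clamp b)); [lia| ring].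
Qed.

Lemma c_d_dominated J : dominated lo hi J c_d (fun _ => 1).
Proof.
  apply (dominated_ext _ _ J
           (fun b s => fsum (fun j => (if Nat.ltb j (clamp b) then 1 else 0) * pi_d j s) r)).
  - intros; symmetry; apply c_d_fsum.
  - apply (dominated_fsum _ _ J (fun j b s => (if Nat.ltb j (clamp b) then 1 else 0) * pi_d j s));
      [intros; lra|].
    intros j _. apply dominated_mult1.
    + apply dominated_const; [intros; lra|]. exists 1. intros b.
      destruct (Nat.ltb j (clamp b)); rewrite ?Rabs_R1, ?Rabs_R0; lra.
    + apply (dominated_reindex _ _ J pi_d (fun _ => 1) (fun _ => j)). apply pi_d_dominated.
Qed.

Lemma cyl_term_dominated J sg : pi_max < sg -> dominated lo hi J cyl_term (fun en => sg ^ snd en).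
Proof.
  intros Hsg. assert (Hr := pi_max_bounds).
  apply (dominated_weaken _ _ J _ (fun en => sg ^ snd en * 1) _ 1).
  - intros; rewrite Rmult_1_r; apply pow_le; lra.
  - intros; lra.
  - apply dominated_mult; [intros; apply pow_le; lra| intros; lra| apply cyl_prob_dominated; auto|].
    apply (dominated_reindex _ _ J c_d (fun _ => 1) (fun en : (nat -> nat) * nat => fst en (S (snd en)))).
    apply c_d_dominated.
Qed.

End OnInterval.

End DigitProbabilities.

(** * Finite r-adic expansions *)

Definition Zfloor (x : R) : Z := (up x - 1)%Z.

Lemma Zfloor_spec x : IZR (Zfloor x) <= x < IZR (Zfloor x) + 1.
Proof. unfold Zfloor. rewrite minus_IZR. destruct (archimed x). lra. Qed.

Lemma Zfloor_unique z x : IZR z <= x < IZR z + 1 -> Zfloor x = z.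
Proof.
  intros H. unfold Zfloor. rewrite <- (up_tech x z); [lia| lra|]. rewrite plus_IZR. lra.
Qed.

Lemma Zfloor_nonneg x : 0 <= x -> (0 <= Zfloor x)%Z.
Proof.
  intros H. destruct (Zfloor_spec x).
  assert (IZR (-1) < IZR (Zfloor x)) by (replace (IZR (-1)) with (-1) by reflexivity; lra).
  apply lt_IZR in H2. lia.
Qed.

Section RAdic.

Variable r : nat.
Hypothesis Hr : (2 <= r)%nat.

(* [prefix N y = floor (r^N y)] encodes the first [N] digits of [y]; [int_digit N M j]
   is the [j]-th of the [N] base-[r] digits of [M], counted from the most significant. *)
Definition prefix (N : nat) (y : R) : nat := Z.to_nat (Zfloor (INR r ^ N * y)).
Definition int_digit (N M j : nat) : nat := ((M / r ^ (N - j)) mod r)%nat.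

Lemma prefix_spec N y : 0 <= y -> INR (prefix N y) <= INR r ^ N * y < INR (prefix N y) + 1.
Proof.
  intros Hy. unfold prefix.
  assert (0 <= INR r ^ N * y) by (apply Rmult_le_pos; [apply pow_le, pos_INR| auto]).
  rewrite INR_IZR_INZ, Z2Nat.id by (apply Zfloor_nonneg; auto). apply Zfloor_spec.
Qed.

Lemma prefix_unique N y M : INR M <= INR r ^ N * y < INR M + 1 -> prefix N y = M.
Proof.
  intros H. unfold prefix. rewrite (Zfloor_unique (Z.of_nat M)); [apply Nat2Z.id|].
  rewrite <- INR_IZR_INZ. auto.
Qed.

Lemma prefix_lt N y : 0 <= y < 1 -> (prefix N y < r ^ N)%nat.
Proof.
  intros Hy. assert (H := prefix_spec N y (proj1 Hy)).
  assert (0 < INR r ^ N) by (apply pow_lt, lt_0_INR; lia).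
  apply INR_lt. rewrite pow_INR. nra.
Qed.

(* Points within [r^-N] of [y0] lie in the cylinder of [y0] or in the one just before it. *)
Lemma prefix_near N y y0 : 0 <= y -> 0 <= y0 ->
  Rabs (INR r ^ N * y - INR r ^ N * y0) < Rmin (INR (prefix N y0) + 1 - INR r ^ N * y0) 1 ->
  prefix N y = prefix N y0 \/ (prefix N y + 1 = prefix N y0)%nat.
Proof.
  intros Hy Hy0 Hxx. assert (H0 := prefix_spec N y0 Hy0).
  assert (Hm1 := Rmin_l (INR (prefix N y0) + 1 - INR r ^ N * y0) 1).
  assert (Hm2 := Rmin_r (INR (prefix N y0) + 1 - INR r ^ N * y0) 1).
  apply Rabs_def2 in Hxx.
  destruct (Rle_dec (INR (prefix N y0)) (INR r ^ N * y)) as [Hge|Hlt].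
  - left. apply prefix_unique. lra.
  - right. assert (H1 : (1 <= prefix N y0)%nat).
    { destruct (prefix N y0) as [|M]; [simpl in Hlt; assert (0 <= INR r ^ N * y)
        by (apply Rmult_le_pos; [apply pow_le, pos_INR| auto]); lra| lia]. }
    replace (prefix N y) with (prefix N y0 - 1)%nat; [lia|].
    symmetry. apply prefix_unique. rewrite minus_INR by auto. simpl INR. lra.
Qed.

Lemma digit_prefix N y j : 0 <= y -> (j <= N)%nat -> digit r y j = int_digit N (prefix N y) j.
Proof.
  intros Hy Hj. unfold digit, int_digit.
  set (M := prefix N y). set (p := (r ^ (N - j))%nat).
  assert (Hp : (0 < p)%nat) by (unfold p; apply Nat.neq_0_lt_0, Nat.pow_nonzero; lia).
  assert (HM := prefix_spec N y Hy). fold M in HM.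
  assert (Hdm := Nat.div_mod_eq M p). assert (Hmb := Nat.mod_upper_bound M p ltac:(lia)).
  assert (HrN : INR r ^ N = INR r ^ j * INR p) by (unfold p; rewrite pow_INR, <- pow_add; f_equal; lia).
  assert (Hpp : 0 < INR p) by (apply lt_0_INR; lia).
  assert (Hfl : (up (INR r ^ j * y) - 1)%Z = Z.of_nat (M / p)).
  { apply (Zfloor_unique (Z.of_nat (M / p))). rewrite <- INR_IZR_INZ.
    assert (E1 : INR M = INR p * INR (M / p) + INR (M mod p))
      by (rewrite <- mult_INR, <- plus_INR; f_equal; auto).
    assert (E2 : INR (M mod p) + 1 <= INR p) by (rewrite <- S_INR; apply le_INR; lia).
    assert (0 <= INR (M mod p)) by apply pos_INR.
    rewrite HrN in HM. split.
    - apply Rmult_le_reg_l with (INR p); auto. nra.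
    - apply Rmult_lt_reg_l with (INR p); auto. nra. }
  rewrite Hfl, <- Nat2Z.inj_mod, Nat2Z.id. reflexivity.
Qed.

Lemma digit_lt y j : (digit r y j < r)%nat.
Proof.
  unfold digit. assert (H := Z.mod_pos_bound (up (INR r ^ j * y) - 1) (Z.of_nat r) ltac:(lia)).
  apply Nat2Z.inj_lt. rewrite Z2Nat.id by lia. lia.
Qed.

Lemma int_digit_S N M j : (j <= N)%nat -> int_digit (S N) M j = int_digit N (M / r) j.
Proof.
  intros Hj. unfold int_digit. replace (S N - j)%nat with (S (N - j)) by lia.
  rewrite Nat.pow_succ_r', Nat.Div0.div_div. reflexivity.
Qed.

Lemma int_digit_last N M : int_digit (S N) M (S N) = (M mod r)%nat.
Proof. unfold int_digit. rewrite Nat.sub_diag, Nat.pow_0_r, Nat.div_1_r. reflexivity. Qed.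

Lemma int_digit_max N j : (1 <= j <= N)%nat -> int_digit N (r ^ N - 1) j = (r - 1)%nat.
Proof.
  intros Hj. unfold int_digit.
  assert (HA : (1 <= r ^ (N - j))%nat) by (apply Nat.le_succ_l, Nat.neq_0_lt_0, Nat.pow_nonzero; lia).
  assert (HB : (1 <= r ^ (j - 1))%nat) by (apply Nat.le_succ_l, Nat.neq_0_lt_0, Nat.pow_nonzero; lia).
  assert (HN : (r ^ N = r ^ (N - j) * (r * r ^ (j - 1)))%nat).
  { rewrite <- Nat.pow_succ_r', <- Nat.pow_add_r. f_equal. lia. }
  set (A := (r ^ (N - j))%nat) in *. set (B := (r ^ (j - 1))%nat) in *.
  assert (Hq : ((r ^ N - 1) / A = r * B - 1)%nat).
  { symmetry. apply (Nat.div_unique _ _ _ (A - 1)); [lia|]. rewrite HN. nia. }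
  rewrite Hq. symmetry. apply (Nat.mod_unique _ _ (B - 1)); [lia| nia].
Qed.

Lemma succ_div_mod_no_carry M : (S (M mod r) < r)%nat ->
  ((M + 1) / r = M / r /\ (M + 1) mod r = S (M mod r))%nat.
Proof.
  intros H. assert (Hdm := Nat.div_mod_eq M r).
  split; [symmetry; apply (Nat.div_unique _ _ _ (S (M mod r))); auto; lia|].
  symmetry; apply (Nat.mod_unique _ _ (M / r)); auto; lia.
Qed.

Lemma succ_div_mod_carry M : (S (M mod r) = r)%nat ->
  ((M + 1) / r = S (M / r) /\ (M + 1) mod r = 0)%nat.
Proof.
  intros H. assert (Hdm := Nat.div_mod_eq M r).
  split; [symmetry; apply (Nat.div_unique _ _ _ 0); [lia|]; rewrite Nat.mul_succ_r; lia|].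
  symmetry; apply (Nat.mod_unique _ _ (S (M / r))); [lia|]. rewrite Nat.mul_succ_r; lia.
Qed.

End RAdic.

(** * Partial sums of the series for [F_s] *)

Lemma pprod_ext f g n : (forall j, (1 <= j <= n)%nat -> f j = g j) -> pprod f n = pprod g n.
Proof.
  induction n as [|n IH]; simpl; intros H; auto.
  rewrite IH by (intros; apply H; lia). rewrite H by lia. reflexivity.
Qed.

Section PartialSums.

Variables (d : nat) (a tau : nat -> nat).
Hypothesis hd : (1 <= d)%nat.
Hypothesis ha : forall j, (j <= d)%nat -> (1 <= a j)%nat.
Hypothesis htau_range : forall b, (b < rr d a)%nat -> (tau b <= d)%nat.
Hypothesis htau_count : forall j, (j <= d)%nat -> tau_count (rr d a) tau j = a j.

Variable s : R.
Hypothesis Hs : 0 < s < 1 / INR (a O).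

Local Notation r := (rr d a).
Local Notation int_digit := (int_digit r).

(* [partial_F N e s] is the [N]-th partial sum of [F_s(y)] when [e] lists the digits of [y]. *)
Definition partial_F (N : nat) (e : nat -> nat) : R := fsum (fun n => cyl_term d a tau (e, n) s) N.

Let r2 : (2 <= r)%nat := rr_ge2 d a hd ha.

Lemma cyl_prob_local e e' n : (forall j, (1 <= j <= n)%nat -> e j = e' j) ->
  cyl_prob d a tau (e, n) s = cyl_prob d a tau (e', n) s.
Proof. intros H. apply pprod_ext. intros j Hj. simpl. rewrite H; auto. Qed.

Lemma cyl_term_local e e' n : (forall j, (1 <= j <= S n)%nat -> e j = e' j) ->
  cyl_term d a tau (e, n) s = cyl_term d a tau (e', n) s.
Proof.
  intros H. unfold cyl_term. rewrite (cyl_prob_local e e') by (intros; apply H; lia).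
  simpl. rewrite H by lia. reflexivity.
Qed.

Lemma partial_F_local N e e' : (forall j, (1 <= j <= N)%nat -> e j = e' j) ->
  partial_F N e = partial_F N e'.
Proof. intros H. apply fsum_ext. intros n Hn. apply cyl_term_local. intros; apply H; lia. Qed.

Lemma c_d_0 : c_d d a tau 0 s = 0.
Proof. unfold c_d. rewrite clamp_id by (assert (H := r2); lia). reflexivity. Qed.

Lemma c_d_succ b : (S b < r)%nat -> c_d d a tau (S b) s = c_d d a tau b s + pi_d d a tau b s.
Proof.
  intros H. unfold c_d, pi_d. rewrite !clamp_id by lia. rewrite !cq_fsum. reflexivity.
Qed.

Lemma c_d_pi_d b :
  c_d d a tau b s + pi_d d a tau b s = fsum (fun j => piq d a tau s j) (S (clamp d a b)).
Proof. unfold c_d, pi_d. rewrite cq_fsum. reflexivity. Qed.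

Lemma c_d_pi_d_last : c_d d a tau (r - 1) s + pi_d d a tau (r - 1) s = 1.
Proof.
  assert (H := r2). rewrite c_d_pi_d, clamp_id by lia.
  replace (S (r - 1)) with r by lia. apply piq_sum; auto.
Qed.

Lemma c_d_pi_d_le1 b : c_d d a tau b s + pi_d d a tau b s <= 1.
Proof.
  rewrite c_d_pi_d, <- (piq_sum d a tau hd ha htau_range htau_count s Hs).
  assert (Hc := clamp_lt d a hd ha b).
  replace r with (S (clamp d a b) + (r - S (clamp d a b)))%nat at 1 by lia.
  rewrite fsum_add.
  assert (0 <= fsum (fun j => piq d a tau s (S (clamp d a b) + j)) (r - S (clamp d a b)))
    by (apply fsum_nonneg; intros; apply piq_nonneg; auto).
  lra.
Qed.

Lemma pi_d_nonneg b : 0 <= pi_d d a tau b s.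
Proof. apply piq_nonneg; auto. Qed.

Lemma c_d_nonneg b : 0 <= c_d d a tau b s.
Proof. unfold c_d. rewrite cq_fsum. apply fsum_nonneg. intros; apply piq_nonneg; auto. Qed.

Lemma cyl_prob_nonneg en : 0 <= cyl_prob d a tau en s.
Proof.
  destruct en as [e n]. unfold cyl_prob; simpl. induction n as [|n IH]; simpl; [lra|].
  apply Rmult_le_pos; auto. apply pi_d_nonneg.
Qed.

Lemma partial_F_S N e :
  partial_F (S N) e = partial_F N e + cyl_prob d a tau (e, N) s * c_d d a tau (e (S N)) s.
Proof. reflexivity. Qed.

Lemma cyl_prob_S N e :
  cyl_prob d a tau (e, S N) s = cyl_prob d a tau (e, N) s * pi_d d a tau (e (S N)) s.
Proof. reflexivity. Qed.

Lemma partial_F_mono N N' e : (N <= N')%nat -> partial_F N e <= partial_F N' e.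
Proof.
  intros H. induction H as [|m _ IH]; [lra|]. rewrite partial_F_S.
  assert (0 <= cyl_prob d a tau (e, m) s * c_d d a tau (e (S m)) s)
    by (apply Rmult_le_pos; [apply cyl_prob_nonneg| apply c_d_nonneg]).
  lra.
Qed.

(* [partial_F N e + cyl_prob (e, N)] is the right end of the image of the cylinder of
   length [N]: it decreases with [N]. *)
Lemma partial_F_upper_mono N N' e : (N <= N')%nat ->
  partial_F N' e + cyl_prob d a tau (e, N') s <= partial_F N e + cyl_prob d a tau (e, N) s.
Proof.
  intros H. induction H as [|m _ IH]; [lra|].
  rewrite partial_F_S, cyl_prob_S. assert (H := c_d_pi_d_le1 (e (S m))).
  assert (H0 := cyl_prob_nonneg (e, m)). nra.
Qed.

Lemma partial_F_top N e : (forall j, (1 <= j <= N)%nat -> e j = (r - 1)%nat) ->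
  partial_F N e + cyl_prob d a tau (e, N) s = 1.
Proof.
  induction N as [|N IH]; intros H; [unfold partial_F, cyl_prob; simpl; ring|].
  rewrite partial_F_S, cyl_prob_S, H by lia.
  rewrite <- (IH ltac:(intros; apply H; lia)).
  assert (Hl := c_d_pi_d_last).
  replace (pi_d d a tau (r - 1) s) with (1 - c_d d a tau (r - 1) s) by lra. ring.
Qed.

(* Adjacent length-[N] cylinders: the partial sum jumps by the measure of the left one. *)
Lemma partial_F_succ N M : (M + 1 < r ^ N)%nat ->
  partial_F N (int_digit N (M + 1)) =
  partial_F N (int_digit N M) + cyl_prob d a tau (int_digit N M, N) s.
Proof.
  revert M. induction N as [|N IH]; intros M HM; [simpl in HM; lia|].
  assert (Hr := r2).
  assert (Hloc : forall K,
    partial_F N (int_digit (S N) K) = partial_F N (int_digit N (K / r)) /\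
    cyl_prob d a tau (int_digit (S N) K, N) s = cyl_prob d a tau (int_digit N (K / r), N) s).
  { intros K. split; [apply partial_F_local| apply cyl_prob_local];
      intros j Hj; apply int_digit_S; lia. }
  rewrite !partial_F_S, !cyl_prob_S, !int_digit_last.
  destruct (Hloc (M + 1)%nat) as [E1 E2]. destruct (Hloc M) as [E3 E4].
  rewrite E1, E2, E3, E4.
  assert (Hmb := Nat.mod_upper_bound M r ltac:(lia)).
  destruct (Nat.eq_dec (S (M mod r)) r) as [Htop|Hlt].
  - destruct (succ_div_mod_carry r Hr M Htop) as [Hq Hm]. rewrite Hq, Hm, c_d_0.
    assert (HM' : (M / r + 1 < r ^ N)%nat).
    { assert (Hdm := Nat.div_mod_eq M r). simpl in HM.
      assert (r * (M / r + 1) < r * r ^ N)%nat by nia. nia. }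
    replace (S (M / r)) with (M / r + 1)%nat by lia. rewrite IH by auto.
    replace (M mod r) with (r - 1)%nat by lia.
    assert (Ht := c_d_pi_d_last). nra.
  - destruct (succ_div_mod_no_carry r Hr M ltac:(lia)) as [Hq Hm]. rewrite Hq, Hm.
    rewrite c_d_succ by lia. ring.
Qed.

Lemma partial_F_int_mono N M M' : (M <= M')%nat -> (M' < r ^ N)%nat ->
  partial_F N (int_digit N M) <= partial_F N (int_digit N M').
Proof.
  intros H. induction H as [|m _ IH]; intros HM; [lra|].
  replace (S m) with (m + 1)%nat by lia. rewrite partial_F_succ by lia.
  assert (0 <= cyl_prob d a tau (int_digit N m, N) s) by apply cyl_prob_nonneg.
  assert (partial_F N (int_digit N M) <= partial_F N (int_digit N m)) by (apply IH; lia). lra.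
Qed.

End PartialSums.

(** * Increasing bijections of [0, 1] *)

Definition clamp01 (t : R) : R := Rmax 0 (Rmin 1 t).

Lemma clamp01_spec t t' : 0 <= clamp01 t <= 1 /\
  Rabs (clamp01 t' - clamp01 t) <= Rabs (t' - t) /\ (0 <= t <= 1 -> clamp01 t = t).
Proof.
  unfold clamp01, Rmax, Rmin.
  repeat destruct Rle_dec; unfold Rabs; repeat destruct Rcase_abs; repeat split; lra.
Qed.

Lemma continuous_on_01_onto (F : R -> R) : continuous_on_01 F -> F 0 = 0 -> F 1 = 1 ->
  forall x, 0 <= x <= 1 -> exists y, 0 <= y <= 1 /\ F y = x.
Proof.
  intros HF H0 H1 x Hx.
  assert (Hc : continuity (fun t => F (clamp01 t) - x)).
  { intros t. apply continuity_pt_eps. intros eps He.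
    destruct (clamp01_spec t t) as [Hct _].
    destruct (HF (clamp01 t) Hct eps He) as [del [Hd H]].
    exists del; split; auto. intros t' Ht'.
    destruct (clamp01_spec t t') as [_ [Hl _]]. destruct (clamp01_spec t' t') as [Hct' _].
    replace (F (clamp01 t') - x - (F (clamp01 t) - x)) with (F (clamp01 t') - F (clamp01 t)) by ring.
    apply H; auto. lra. }
  destruct (clamp01_spec 0 0) as [_ [_ C0]]. destruct (clamp01_spec 1 1) as [_ [_ C1]].
  destruct (IVT_cor _ 0 1 Hc) as [z [Hz Hg]]; [lra| rewrite C0, C1, H0, H1 by lra; nra|].
  exists z. destruct (clamp01_spec z z) as [_ [_ Cz]]. rewrite Cz in Hg by auto. split; [auto| lra].
Qed.

Lemma inverse_continuous_on_01 (F G : R -> R) :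
  (forall y y', 0 <= y -> y < y' -> y' <= 1 -> F y < F y') ->
  (forall x, 0 <= x <= 1 -> 0 <= G x <= 1 /\ F (G x) = x) ->
  continuous_on_01 G.
Proof.
  intros Hinc HG x0 Hx0 eps He. destruct (HG x0 Hx0) as [Hy0 HF0].
  set (y0 := G x0) in *.
  set (dl := if Rle_dec 0 (y0 - eps / 2) then x0 - F (y0 - eps / 2) else 1).
  set (dh := if Rle_dec (y0 + eps / 2) 1 then F (y0 + eps / 2) - x0 else 1).
  assert (Hdl : 0 < dl).
  { unfold dl. destruct (Rle_dec 0 (y0 - eps / 2)); [|lra].
    assert (F (y0 - eps / 2) < F y0) by (apply Hinc; lra). lra. }
  assert (Hdh : 0 < dh).
  { unfold dh. destruct (Rle_dec (y0 + eps / 2) 1); [|lra].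
    assert (F y0 < F (y0 + eps / 2)) by (apply Hinc; lra). lra. }
  exists (Rmin dl dh). split; [apply Rmin_pos; auto|].
  intros x Hx Hxx. destruct (HG x Hx) as [Hy HF].
  assert (H1 := Rmin_l dl dh). assert (H2 := Rmin_r dl dh). apply Rabs_def2 in Hxx.
  apply Rabs_def1; apply Rnot_le_lt; intros Hc.
  - assert (y0 + eps / 2 <= 1) by lra.
    assert (F (y0 + eps / 2) < F (G x)) by (apply Hinc; lra).
    assert (dh = F (y0 + eps / 2) - x0)
      by (unfold dh; destruct (Rle_dec (y0 + eps / 2) 1); [auto| contradiction]).
    lra.
  - assert (0 <= y0 - eps / 2) by lra.
    assert (F (G x) < F (y0 - eps / 2)) by (apply Hinc; lra).
    assert (dl = x0 - F (y0 - eps / 2))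
      by (unfold dl; destruct (Rle_dec 0 (y0 - eps / 2)); [auto| contradiction]).
    lra.
Qed.

Lemma continuous_on_01_comp (F G : R -> R) :
  (forall x, 0 <= x <= 1 -> 0 <= G x <= 1) ->
  continuous_on_01 F -> continuous_on_01 G -> continuous_on_01 (fun x => F (G x)).
Proof.
  intros HG HF HGc x0 Hx0 eps He.
  destruct (HF (G x0) (HG x0 Hx0) eps He) as [d1 [Hd1 H1]].
  destruct (HGc x0 Hx0 d1 Hd1) as [d2 [Hd2 H2]].
  exists d2; split; [auto|]. intros x Hx Hxx. apply H1; [apply HG| apply H2]; auto.
Qed.

(** * The distribution function [F_s] *)

Section DistributionFunction.

Variables (d : nat) (a tau : nat -> nat).
Hypothesis hd : (1 <= d)%nat.
Hypothesis ha : forall j, (j <= d)%nat -> (1 <= a j)%nat.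
Hypothesis htau_range : forall b, (b < rr d a)%nat -> (tau b <= d)%nat.
Hypothesis htau_count : forall j, (j <= d)%nat -> tau_count (rr d a) tau j = a j.
Variables lo hi q : R.
Hypothesis Hlo : 0 < lo.
Hypothesis Hlohi : lo < hi.
Hypothesis Hhi : hi < 1 / INR (a O).
Hypothesis Hq : lo < q < hi.

Local Notation r := (rr d a).
Local Notation partial_F := (partial_F d a tau).
Local Notation int_digit := (int_digit r).
Local Notation prefix := (prefix r).
Local Notation Fq := (Fq d a tau).

Let r2 : (2 <= r)%nat := rr_ge2 d a hd ha.
Let q_domain : 0 < q < 1 / INR (a O).
Proof. lra. Qed.

Definition digits (y : R) : nat -> nat := digit r y.

Lemma digits_prefix N y j : 0 <= y -> (1 <= j <= N)%nat -> digits y j = int_digit N (prefix N y) j.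
Proof. intros Hy Hj. apply digit_prefix; auto; lia. Qed.

Lemma partial_F_prefix s N y : 0 <= y ->
  partial_F s N (digits y) = partial_F s N (int_digit N (prefix N y)).
Proof. intros Hy. apply partial_F_local; auto. intros; apply digits_prefix; auto. Qed.

Lemma cyl_prob_prefix s N y : 0 <= y ->
  cyl_prob d a tau (digits y, N) s = cyl_prob d a tau (int_digit N (prefix N y), N) s.
Proof. intros Hy. apply cyl_prob_local. intros; apply digits_prefix; auto. Qed.

Lemma cyl_term_geometric en s : lo < s < hi ->
  Rabs (cyl_term d a tau en s) <= 1 * pi_max d a lo hi ^ snd en.
Proof.
  intros Hs. assert (Hd : 0 < s < 1 / INR (a O)) by lra.
  destruct (cyl_prob_bounds d a tau hd ha htau_range htau_count lo hi Hlo Hlohi Hhi en s Hs).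
  assert (H1 := c_d_pi_d_le1 d a tau hd ha htau_range htau_count s Hd (fst en (S (snd en)))).
  assert (0 <= pi_d d a tau (fst en (S (snd en))) s) by (apply pi_d_nonneg; auto).
  assert (0 <= c_d d a tau (fst en (S (snd en))) s) by (apply c_d_nonneg; auto).
  unfold cyl_term. rewrite Rabs_right by (apply Rle_ge, Rmult_le_pos; auto).
  rewrite Rmult_1_l. rewrite <- (Rmult_1_r (pi_max d a lo hi ^ snd en)).
  apply Rmult_le_compat; auto; lra.
Qed.

Lemma partial_F_cv s y : lo < s < hi ->
  Un_cv (fun N => partial_F s N (digits y)) (series (fun n => cyl_term d a tau (digits y, n) s)).
Proof.
  intros Hs. assert (H := pi_max_bounds d a tau hd ha htau_range htau_count lo hi Hlo Hlohi Hhi).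
  apply (series_geometric _ (pi_max d a lo hi) 1); [lra|].
  intros n. apply (cyl_term_geometric (digits y, n)); auto.
Qed.

Lemma Fq_series s y : 0 <= y < 1 -> lo < s < hi ->
  Fq s y = series (fun n => cyl_term d a tau (digits y, n) s).
Proof.
  intros Hy Hs. unfold Defs.Fq. destruct (Rle_dec 1 y) as [Hn|_]; [lra|].
  set (f := fun n => pprod (fun j => piq d a tau s (digit r y j)) n * cq d a tau s (digit r y (S n))).
  assert (Hf : forall n, f n = cyl_term d a tau (digits y, n) s).
  { intros n. unfold f, cyl_term, cyl_prob, pi_d, c_d, digits; simpl.
    rewrite (clamp_id d a hd (digit r y (S n))) by (apply digit_lt; auto).
    f_equal. apply pprod_ext. intros j _. rewrite clamp_id; auto. apply digit_lt; auto. }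
  assert (Hinf : infinite_sum f (series (fun n => cyl_term d a tau (digits y, n) s))).
  { intros eps He. destruct (partial_F_cv s y Hs eps He) as [N HN].
    exists N. intros n Hn.
    rewrite sum_f_R0_fsum, (fsum_ext f (fun k => cyl_term d a tau (digits y, k) s))
      by (intros; apply Hf).
    apply (HN (S n)). lia. }
  apply (uniqueness_sum f); auto.
  apply (epsilon_spec (inhabits 0) (fun l => infinite_sum f l)). eexists; eauto.
Qed.

Lemma Fq_one : Fq q 1 = 1.
Proof. unfold Defs.Fq. destruct (Rle_dec 1 1); [reflexivity| lra]. Qed.

Lemma Fq_zero : Fq q 0 = 0.
Proof.
  rewrite Fq_series by lra. rewrite (series_ext _ (fun _ => 0)).
  - apply lim_seq_spec. intros eps He. exists O. intros n _.
    unfold Rdist. rewrite fsum_zero, Rminus_0_r, Rabs_R0. lra.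
  - intros n. unfold cyl_term. simpl.
    replace (digits 0 (S n)) with O.
    + rewrite c_d_0 by auto. ring.
    + unfold digits, digit. rewrite Rmult_0_r. replace (up 0 - 1)%Z with 0%Z; [reflexivity|].
      symmetry. apply (Zfloor_unique 0 0). simpl; lra.
Qed.

Lemma Fq_cylinder_bounds y N : 0 <= y < 1 ->
  partial_F q N (int_digit N (prefix N y)) <= Fq q y <=
  partial_F q N (int_digit N (prefix N y)) + cyl_prob d a tau (int_digit N (prefix N y), N) q.
Proof.
  intros Hy. rewrite Fq_series, <- partial_F_prefix, <- cyl_prob_prefix by lra.
  apply (Un_cv_bounds (fun n => partial_F q n (digits y)) _ N); [apply partial_F_cv; auto|].
  intros n Hn. split; [apply partial_F_mono; auto|].
  assert (H1 := partial_F_upper_mono d a tau hd ha htau_range htau_count q q_domain N n (digits y) Hn).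
  assert (0 <= cyl_prob d a tau (digits y, n) q) by (apply cyl_prob_nonneg; auto). lra.
Qed.

Lemma cyl_prob_pos en : 0 < cyl_prob d a tau en q.
Proof.
  destruct en as [e n]. unfold cyl_prob; simpl. induction n as [|n IH]; simpl; [lra|].
  apply Rmult_lt_0_compat; auto. unfold pi_d. rewrite piq_uq by auto.
  apply Rmult_lt_0_compat; [lra| apply pow_lt, uq_pos; auto].
Qed.

Lemma Fq_lt_partial_F y N M' : 0 <= y < 1 -> (prefix N y + 2 <= M')%nat -> (M' < r ^ N)%nat ->
  Fq q y < partial_F q N (int_digit N M').
Proof.
  intros Hy HM HM'. set (M := prefix N y) in *.
  destruct (Fq_cylinder_bounds y N Hy) as [_ Hup]. fold M in Hup.
  assert (I1 := partial_F_succ d a tau hd ha htau_range htau_count q q_domain N M ltac:(lia)).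
  assert (I2 := partial_F_succ d a tau hd ha htau_range htau_count q q_domain N (M + 1) ltac:(lia)).
  assert (Hp := cyl_prob_pos (int_digit N (M + 1), N)).
  assert (partial_F q N (int_digit N (M + 1 + 1)) <= partial_F q N (int_digit N M'))
    by (apply partial_F_int_mono; auto; lia).
  lra.
Qed.

Lemma Fq_strict y y' : 0 <= y -> y < y' -> y' <= 1 -> Fq q y < Fq q y'.
Proof.
  intros Hy Hyy Hy'. assert (Hr : INR r > 1) by (apply (lt_INR 1); lia).
  destruct (Pow_x_infinity (INR r) ltac:(rewrite Rabs_right; lra) (3 / (y' - y))) as [N HN].
  specialize (HN N (le_n N)). rewrite Rabs_right in HN by (apply Rle_ge, pow_le; lra).
  assert (HNe : 2 < INR r ^ N * (y' - y)).
  { replace 2 with (2 / (y' - y) * (y' - y)) by (field; lra).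
    apply Rmult_lt_compat_r; [lra|]. apply Rlt_le_trans with (3 / (y' - y)); [|lra].
    unfold Rdiv. apply Rmult_lt_compat_r; [apply Rinv_0_lt_compat|]; lra. }
  assert (HM := prefix_spec r N y Hy). rewrite <- pow_INR in HM, HNe.
  rewrite Rmult_minus_distr_l in HNe.
  destruct (Rle_dec 1 y') as [H1|H1].
  - replace y' with 1 in * by lra. rewrite Fq_one.
    assert (Htop := partial_F_top d a tau hd ha htau_range htau_count q q_domain N
                      (int_digit N (r ^ N - 1)) ltac:(intros j Hj; apply int_digit_max; auto)).
    assert (0 <= cyl_prob d a tau (int_digit N (r ^ N - 1), N) q) by (apply cyl_prob_nonneg; auto).
    assert (Hlt : (prefix N y + 2 < r ^ N)%nat)
      by (apply INR_lt; rewrite plus_INR; simpl INR; lra).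
    assert (Fq q y < partial_F q N (int_digit N (r ^ N - 1))); [|lra].
    apply Fq_lt_partial_F; [lra| lia| lia].
  - assert (HM' := prefix_spec r N y' ltac:(lra)). rewrite <- pow_INR in HM'.
    destruct (Fq_cylinder_bounds y' N ltac:(lra)) as [Hlo' _].
    assert (Hlt : (prefix N y + 1 < prefix N y')%nat)
      by (apply INR_lt; rewrite plus_INR; simpl INR; lra).
    assert (Fq q y < partial_F q N (int_digit N (prefix N y'))); [|lra].
    apply Fq_lt_partial_F; [lra| lia| apply prefix_lt; auto; lra].
Qed.

End DistributionFunction.

(** * Derivatives of [F_s] in [s] *)

Section Derivatives.

Variables (d : nat) (a tau : nat -> nat).
Hypothesis hd : (1 <= d)%nat.
Hypothesis ha : forall j, (j <= d)%nat -> (1 <= a j)%nat.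
Hypothesis htau_range : forall b, (b < rr d a)%nat -> (tau b <= d)%nat.
Hypothesis htau_count : forall j, (j <= d)%nat -> tau_count (rr d a) tau j = a j.
Variables lo hi q : R.
Hypothesis Hlo : 0 < lo.
Hypothesis Hlohi : lo < hi.
Hypothesis Hhi : hi < 1 / INR (a O).
Hypothesis Hq : lo < q < hi.

Local Notation r := (rr d a).
Local Notation partial_F := (partial_F d a tau).
Local Notation int_digit := (int_digit r).
Local Notation prefix := (prefix r).
Local Notation Fq := (Fq d a tau).
Local Notation digits := (digits d a).

Let r2 : (2 <= r)%nat := rr_ge2 d a hd ha.

Definition decay : R := (1 + pi_max d a lo hi) / 2.

Lemma decay_bounds : pi_max d a lo hi < decay /\ 0 <= decay < 1.
Proof.
  assert (H := pi_max_bounds d a tau hd ha htau_range htau_count lo hi Hlo Hlohi Hhi).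
  unfold decay; lra.
Qed.

Variable J : nat.
Variables (DT DP : nat -> (nat -> nat) * nat -> R -> R) (KT KP : R).
Hypothesis HT0 : forall en, DT O en = cyl_term d a tau en.
Hypothesis HTj : forall en, jet lo hi J (fun m => DT m en).
Hypothesis HTb : forall m en s, (m <= J)%nat -> lo < s < hi -> Rabs (DT m en s) <= KT * decay ^ snd en.
Hypothesis HP0 : forall en, DP O en = cyl_prob d a tau en.
Hypothesis HPj : forall en, jet lo hi J (fun m => DP m en).
Hypothesis HPb : forall m en s, (m <= J)%nat -> lo < s < hi -> Rabs (DP m en s) <= KP * decay ^ snd en.

Lemma KP_nonneg : 0 <= KP.
Proof.
  assert (H := HPb O (fun _ => O, O) q (Nat.le_0_l _) Hq). simpl in H.
  assert (H' := Rabs_pos (DP 0 (fun _ => 0%nat, 0%nat) q)). lra.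
Qed.

Definition dF (m : nat) (e : nat -> nat) (s : R) : R := series (fun n => DT m (e, n) s).
Definition partial_dF (m N : nat) (e : nat -> nat) (s : R) : R := fsum (fun n => DT m (e, n) s) N.
Definition tail (N : nat) : R := KT * decay ^ N / (1 - decay).

Lemma dF_jet e : jet lo hi (pred J) (fun m s => dF m e s).
Proof.
  destruct decay_bounds as [_ Hs].
  apply (series_jet lo hi J (fun m n => DT m (e, n)) decay KT); auto.
Qed.

Lemma dF_0 e s : dF O e s = series (fun n => cyl_term d a tau (e, n) s).
Proof. apply series_ext. intros; rewrite HT0; reflexivity. Qed.

Lemma dF_tail m e N s : (m <= J)%nat -> lo < s < hi -> Rabs (dF m e s - partial_dF m N e s) <= tail N.
Proof.
  intros Hm Hs. destruct decay_bounds as [_ Hsg].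
  apply (series_geometric (fun n => DT m (e, n) s) decay KT Hsg).
  intros; apply (HTb m (e, n)); auto.
Qed.

Lemma tail_nonneg N : 0 <= tail N.
Proof.
  destruct decay_bounds as [_ Hsg].
  assert (H := dF_tail O (fun _ => O) N q (Nat.le_0_l _) Hq).
  assert (H' := Rabs_pos (dF 0 (fun _ => 0%nat) q - partial_dF 0 N (fun _ => 0%nat) q)). lra.
Qed.

(* Jets agree once their values agree on (lo, hi), so identities between partial sums of
   [F_s] carry over to all their derivatives. *)
Lemma partial_dF_local m N e e' s : (m <= J)%nat -> lo < s < hi ->
  (forall j, (1 <= j <= N)%nat -> e j = e' j) -> partial_dF m N e s = partial_dF m N e' s.
Proof.
  intros Hm Hs He. apply fsum_ext. intros n Hn.
  apply (jet_unique lo hi J (fun m => DT m (e, n)) (fun m => DT m (e', n))); auto.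
  intros x Hx. rewrite !HT0. apply cyl_term_local; auto. intros; apply He; lia.
Qed.

Lemma partial_dF_succ m N M s : (m <= J)%nat -> lo < s < hi -> (M + 1 < r ^ N)%nat ->
  partial_dF m N (int_digit N (M + 1)) s = partial_dF m N (int_digit N M) s + DP m (int_digit N M, N) s.
Proof.
  intros Hm Hs HM.
  apply (jet_unique lo hi J (fun m s => partial_dF m N (int_digit N (M + 1)) s)
           (fun m s => partial_dF m N (int_digit N M) s + DP m (int_digit N M, N) s)); auto.
  - apply (jet_fsum lo hi J (fun m n => DT m (int_digit N (M + 1), n))). intros; apply HTj.
  - apply jet_plus; [|apply HPj]. apply (jet_fsum lo hi J (fun m n => DT m (int_digit N M, n))).
    intros; apply HTj.
  - intros x Hx. unfold partial_dF.
    rewrite HP0, !(fsum_ext (fun n => DT 0 _ x) (fun n => cyl_term d a tau (_, n) x))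
      by (intros; rewrite HT0; reflexivity).
    apply partial_F_succ; auto. lra.
Qed.

Lemma partial_dF_top m N e s : (m <= J)%nat -> lo < s < hi ->
  (forall j, (1 <= j <= N)%nat -> e j = (r - 1)%nat) ->
  partial_dF m N e s + DP m (e, N) s = match m with O => 1 | _ => 0 end.
Proof.
  intros Hm Hs He.
  apply (jet_unique lo hi J (fun m s => partial_dF m N e s + DP m (e, N) s)
                            (fun m _ => match m with O => 1 | _ => 0 end)); auto.
  - apply jet_plus; [|apply HPj]. apply (jet_fsum lo hi J (fun m n => DT m (e, n))). intros; apply HTj.
  - apply jet_const.
  - intros x Hx. unfold partial_dF. rewrite HP0, (fsum_ext _ (fun n => cyl_term d a tau (e, n) x))
      by (intros; rewrite HT0; reflexivity).
    apply partial_F_top; auto. lra.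
Qed.

(* [DF m y] is the [m]-th derivative of [s |-> F_s(y)] at [s = q]. *)
Definition DF (m : nat) (y : R) : R :=
  if Rle_dec 1 y then match m with O => 1 | _ => 0 end else dF m (digits y) q.

Lemma partial_dF_prefix m N y : (m <= J)%nat -> 0 <= y ->
  partial_dF m N (digits y) q = partial_dF m N (int_digit N (prefix N y)) q.
Proof. intros Hm Hy. apply partial_dF_local; auto. intros; apply digits_prefix; auto. Qed.

Lemma DF_same_cylinder m N y y' : (m <= J)%nat -> 0 <= y < 1 -> 0 <= y' < 1 ->
  prefix N y = prefix N y' -> Rabs (DF m y - DF m y') <= 2 * tail N.
Proof.
  intros Hm Hy Hy' HM. unfold DF.
  destruct (Rle_dec 1 y); [lra|]. destruct (Rle_dec 1 y'); [lra|].
  assert (H1 := dF_tail m (digits y) N q Hm Hq). assert (H2 := dF_tail m (digits y') N q Hm Hq).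
  rewrite partial_dF_prefix in H1, H2 by (auto; lra). rewrite HM in H1.
  replace (dF m (digits y) q - dF m (digits y') q)
    with ((dF m (digits y) q - partial_dF m N (int_digit N (prefix N y')) q)
          - (dF m (digits y') q - partial_dF m N (int_digit N (prefix N y')) q)) by ring.
  eapply Rle_trans; [apply Rabs_triang|]. rewrite Rabs_Ropp. lra.
Qed.

Lemma DF_next_cylinder m N y y' : (m <= J)%nat -> 0 <= y < 1 -> 0 <= y' < 1 ->
  (prefix N y + 1 = prefix N y')%nat -> Rabs (DF m y - DF m y') <= 2 * tail N + KP * decay ^ N.
Proof.
  intros Hm Hy Hy' HM. unfold DF.
  destruct (Rle_dec 1 y); [lra|]. destruct (Rle_dec 1 y'); [lra|].
  assert (H1 := dF_tail m (digits y) N q Hm Hq). assert (H2 := dF_tail m (digits y') N q Hm Hq).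
  rewrite partial_dF_prefix in H1, H2 by (auto; lra). rewrite <- HM in H2.
  rewrite partial_dF_succ in H2 by (auto; rewrite HM; apply prefix_lt; auto).
  assert (Hp := HPb m (int_digit N (prefix N y), N) q Hm Hq). simpl in Hp.
  set (P := partial_dF m N (int_digit N (prefix N y)) q) in *.
  set (D := DP m (int_digit N (prefix N y), N) q) in *.
  replace (dF m (digits y) q - dF m (digits y') q)
    with ((dF m (digits y) q - P) - (dF m (digits y') q - (P + D)) - D) by ring.
  eapply Rle_trans; [apply Rabs_triang|]. rewrite Rabs_Ropp.
  eapply Rle_trans; [apply Rplus_le_compat_r, Rabs_triang|]. rewrite Rabs_Ropp. lra.
Qed.

Lemma DF_last_cylinder m N y : (m <= J)%nat -> 0 <= y < 1 -> prefix N y = (r ^ N - 1)%nat ->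
  Rabs (DF m y - DF m 1) <= tail N + KP * decay ^ N.
Proof.
  intros Hm Hy HM. unfold DF.
  destruct (Rle_dec 1 y); [lra|]. destruct (Rle_dec 1 1); [|lra].
  assert (H1 := dF_tail m (digits y) N q Hm Hq).
  assert (Htop := partial_dF_top m N (digits y) q Hm Hq).
  assert (Hp := HPb m (digits y, N) q Hm Hq). simpl in Hp.
  replace (dF m (digits y) q - match m with O => 1 | S _ => 0 end)
    with ((dF m (digits y) q - partial_dF m N (digits y) q) - DP m (digits y, N) q)
    by (rewrite <- Htop; [ring|]; intros j Hj; rewrite (digits_prefix d a hd ha N), HM by (auto; lra);
        apply int_digit_max; auto).
  eapply Rle_trans; [apply Rabs_triang|]. rewrite Rabs_Ropp. lra.
Qed.

Definition DF_error (N : nat) : R := 2 * tail N + KP * decay ^ N.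

Lemma DF_error_small eps : 0 < eps -> exists N, DF_error N < eps.
Proof.
  intros He. destruct decay_bounds as [_ Hsg]. assert (HKP := KP_nonneg).
  assert (HKT : 0 <= KT).
  { assert (H := tail_nonneg O). unfold tail in H. simpl in H.
    apply Rmult_le_reg_r with (/ (1 - decay)); [apply Rinv_0_lt_compat|]; lra. }
  destruct (geometric_small decay (2 * KT + KP * (1 - decay)) eps Hsg) as [N HN]; auto.
  { assert (0 <= KP * (1 - decay)) by (apply Rmult_le_pos; lra). lra. }
  exists N. specialize (HN N (le_n N)). unfold DF_error, tail.
  replace (2 * (KT * decay ^ N / (1 - decay)) + KP * decay ^ N)
    with ((2 * KT + KP * (1 - decay)) * decay ^ N / (1 - decay)) by (field; lra).
  lra.
Qed.

Lemma DF_error_bounds N : 0 <= tail N /\ 0 <= KP * decay ^ N.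
Proof.
  destruct decay_bounds as [_ Hsg]. split; [apply tail_nonneg|].
  apply Rmult_le_pos; [apply KP_nonneg| apply pow_le; lra].
Qed.

Lemma INR_rr_pow_pos N : 0 < INR r ^ N.
Proof. apply pow_lt, lt_0_INR. lia. Qed.

Lemma DF_near_1 m N y : (m <= J)%nat -> 0 <= y <= 1 -> Rabs (y - 1) < / INR r ^ N ->
  Rabs (DF m y - DF m 1) <= DF_error N.
Proof.
  intros Hm Hy Hyy. assert (Hrn := INR_rr_pow_pos N). destruct (DF_error_bounds N).
  unfold DF_error. destruct (Rle_dec 1 y) as [Hy1|Hy1].
  { replace y with 1 by lra. replace (DF m 1 - DF m 1) with 0 by ring. rewrite Rabs_R0. lra. }
  assert (HM : prefix N y = (r ^ N - 1)%nat).
  { assert (H1N : (1 <= r ^ N)%nat) by (apply Nat.le_succ_l, Nat.neq_0_lt_0, Nat.pow_nonzero; lia).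
    apply prefix_unique. rewrite minus_INR, pow_INR by auto. simpl INR.
    apply Rabs_def2 in Hyy.
    assert (INR r ^ N * (1 - y) < 1).
    { apply Rmult_lt_reg_l with (/ INR r ^ N); [apply Rinv_0_lt_compat; auto|].
      rewrite <- Rmult_assoc, Rinv_l, Rmult_1_l, Rmult_1_r by lra. lra. }
    split; nra. }
  eapply Rle_trans; [apply (DF_last_cylinder m N); auto; lra| lra].
Qed.

Lemma DF_near m N y0 y : (m <= J)%nat -> 0 <= y0 < 1 -> 0 <= y <= 1 ->
  Rabs (y - y0) < Rmin (INR (prefix N y0) + 1 - INR r ^ N * y0) 1 / INR r ^ N ->
  Rabs (DF m y - DF m y0) <= DF_error N.
Proof.
  intros Hm Hy0 Hy Hyy. assert (Hrn := INR_rr_pow_pos N). destruct (DF_error_bounds N).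
  assert (HM0 := prefix_spec r N y0 (proj1 Hy0)).
  assert (HM0lt := prefix_lt r r2 N y0 Hy0).
  set (w := Rmin (INR (prefix N y0) + 1 - INR r ^ N * y0) 1) in *.
  assert (Hxx : Rabs (INR r ^ N * y - INR r ^ N * y0) < w).
  { rewrite <- Rmult_minus_distr_l, Rabs_mult, (Rabs_right (INR r ^ N)) by lra.
    apply Rmult_lt_reg_l with (/ INR r ^ N); [apply Rinv_0_lt_compat; auto|].
    rewrite <- Rmult_assoc, Rinv_l, Rmult_1_l by lra. unfold Rdiv in Hyy. lra. }
  assert (Hyl : y < 1).
  { assert (INR (prefix N y0) + 1 <= INR r ^ N)
      by (rewrite <- pow_INR, <- S_INR; apply le_INR; lia).
    assert (Hm1 := Rmin_l (INR (prefix N y0) + 1 - INR r ^ N * y0) 1). fold w in Hm1.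
    apply Rabs_def2 in Hxx. apply Rmult_lt_reg_l with (INR r ^ N); auto. lra. }
  unfold DF_error.
  destruct (prefix_near r r2 N y y0) as [Hs|Hn]; try lra; auto.
  - eapply Rle_trans; [apply (DF_same_cylinder m N); auto; lra| lra].
  - apply (DF_next_cylinder m N); auto; lra.
Qed.

Lemma DF_continuous m : (m <= J)%nat -> continuous_on_01 (DF m).
Proof.
  intros Hm y0 Hy0 eps He. destruct (DF_error_small eps He) as [N HN].
  assert (Hrn := INR_rr_pow_pos N).
  destruct (Rle_dec 1 y0) as [Hy1|Hy1].
  - assert (y0 = 1) by lra. subst y0.
    exists (/ INR r ^ N). split; [apply Rinv_0_lt_compat; auto|].
    intros y Hy Hyy. eapply Rle_lt_trans; [apply DF_near_1; eauto| auto].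
  - assert (HM0 := prefix_spec r N y0 (proj1 Hy0)).
    exists (Rmin (INR (prefix N y0) + 1 - INR r ^ N * y0) 1 / INR r ^ N).
    split; [apply Rdiv_lt_0_compat; auto; apply Rmin_pos; lra|].
    intros y Hy Hyy. eapply Rle_lt_trans; [apply DF_near; eauto; lra| auto].
Qed.

Lemma Fq_DF y : 0 <= y <= 1 -> Fq q y = DF O y.
Proof.
  intros Hy. unfold DF. destruct (Rle_dec 1 y) as [H|H].
  - unfold Defs.Fq. destruct (Rle_dec 1 y); [reflexivity| lra].
  - rewrite dF_0. apply (Fq_series d a tau hd ha htau_range htau_count lo hi); auto; lra.
Qed.

Lemma Fq_inv_spec x : 0 <= x <= 1 -> 0 <= Fq_inv d a tau q x <= 1 /\ Fq q (Fq_inv d a tau q x) = x.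
Proof.
  intros Hx. apply (epsilon_spec (inhabits 0) (fun y => 0 <= y <= 1 /\ Fq q y = x)).
  apply continuous_on_01_onto; auto.
  - intros y0 Hy0 eps He. destruct (DF_continuous O (Nat.le_0_l _) y0 Hy0 eps He) as [del [Hd H]].
    exists del; split; auto. intros y Hy Hyy. rewrite !Fq_DF by auto. apply H; auto.
  - apply (Fq_zero d a tau hd ha htau_range htau_count lo hi q); auto.
  - apply Fq_one.
Qed.

Lemma Sp_derivatives k : (k < J)%nat ->
  exists T : R -> R,
    (forall x, 0 <= x <= 1 -> is_nth_deriv k (fun s => Sp d a tau q s x) q (T x)) /\
    continuous_on_01 T.
Proof.
  intros Hk. exists (fun x => DF k (Fq_inv d a tau q x)). split.
  - intros x Hx. destruct (Fq_inv_spec x Hx) as [Hy _].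
    unfold Sp. set (y := Fq_inv d a tau q x) in *. unfold DF.
    destruct (Rle_dec 1 y) as [H1|H1].
    + apply (jet_is_nth_deriv lo hi k (fun m _ => match m with O => 1 | _ => 0 end)); auto.
      * apply jet_const.
      * intros s Hs. unfold Defs.Fq. destruct (Rle_dec 1 y); [reflexivity| lra].
    + apply (jet_is_nth_deriv lo hi (pred J) (fun m s => dF m (digits y) s)); auto; [apply dF_jet| |lia].
      intros s Hs. rewrite dF_0. apply (Fq_series d a tau hd ha htau_range htau_count lo hi); auto; lra.
  - apply continuous_on_01_comp; [intros; apply Fq_inv_spec; auto| apply DF_continuous; lia|].
    apply inverse_continuous_on_01 with (F := Fq q); [|apply Fq_inv_spec].
    intros; apply (Fq_strict d a tau hd ha htau_range htau_count lo hi q); auto.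
Qed.

End Derivatives.

Theorem mainTheorem9 (d : nat) (a tau : nat -> nat)
  (hd : (1 <= d)%nat)
  (ha : forall j, (j <= d)%nat -> (1 <= a j)%nat)
  (htau_range : forall b, (b < rr d a)%nat -> (tau b <= d)%nat)
  (htau_count : forall j, (j <= d)%nat -> tau_count (rr d a) tau j = a j)
  (q : R) (hq : 0 < q < 1 / INR (a 0%nat))
  (k : nat) (hk : (1 <= k)%nat) :
  exists T : R -> R,
    (forall x, 0 <= x <= 1 ->
       is_nth_deriv k (fun s => Sp d a tau q s x) q (T x)) /\
    continuous_on_01 T.
Proof.
  set (lo := q / 2). set (hi := (q + 1 / INR (a 0%nat)) / 2).
  assert (Hlo : 0 < lo) by (unfold lo; lra).
  assert (Hlohi : lo < hi) by (unfold lo, hi; lra).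
  assert (Hhi : hi < 1 / INR (a 0%nat)) by (unfold hi; lra).
  assert (Hq : lo < q < hi) by (unfold lo, hi; lra).
  destruct (decay_bounds d a tau hd ha htau_range htau_count lo hi Hlo Hlohi Hhi) as [Hdecay Hdecay01].
  set (w := fun en : (nat -> nat) * nat => decay d a lo hi ^ snd en).
  assert (Hw : forall en, 0 <= w en) by (intros; apply pow_le; lra).
  destruct (dominated_jet lo hi (S k) (cyl_term d a tau) w Hw
              (cyl_term_dominated d a tau hd ha htau_range htau_count lo hi Hlo Hlohi Hhi _ _ Hdecay))
    as [DT [KT [HT0 [HTj HTb]]]].
  destruct (dominated_jet lo hi (S k) (cyl_prob d a tau) w Hw
              (cyl_prob_dominated d a tau hd ha htau_range htau_count lo hi Hlo Hlohi Hhi _ _ Hdecay))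
    as [DP [KP [HP0 [HPj HPb]]]].
  apply (Sp_derivatives d a tau hd ha htau_range htau_count lo hi q Hlo Hlohi Hhi Hq (S k) DT DP KT KP);
    auto.
Qed.
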